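(* Assume the van Kampen setup below, with compatible future retracts $Q_k:\vec\pi_1(X_k)\to\vec\pi_1(X_k,B_k)$ and compatible future retracts $P_k:\vec\pi_1(X_k,B_k)\to\vec\pi_1(X_k,A_k)$ ($k=0,1,2$), each $P_k$ being left adjoint to the inclusion $\iota_k:\vec\pi_1(X_k,A_k)\to\vec\pi_1(X_k,B_k)$. Let $P:\vec\pi_1(X,B)\to\vec\pi_1(X,A)$ be the unique functor with $P\circ j_k=j'_k\circ P_k$ ($k=1,2$). Then $P$ is left adjoint to the inclusion $\iota:\vec\pi_1(X,A)\to\vec\pi_1(X,B)$, with unit given at $x\in B$ by the image of the unit of $P_k$ at $x$ (for any $k\in\{1,2\}$ with $x\in B_k$) and counit the identity; in particular $P$ is a future retract of $\vec\pi_1(X,B)$ onto $\vec\pi_1(X,A)$.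
   Context: A d-space is a topological space with a set of continuous paths $[0,1]\to X$ (dipaths) containing all constant paths, closed under precomposition with continuous non-decreasing maps $[0,1]\to[0,1]$ and under concatenation; subsets carry the dipaths with image in them. The fundamental category $\vec\pi_1(X)$ has objects the points of $X$ and morphisms $a\to b$ the classes of dipaths from $a$ to $b$ modulo the equivalence relation generated by endpoint-fixing directed homotopies; composition is concatenation. For $A\subseteq X$, $\vec\pi_1(X,A)$ is the full subcategory on objects in $A$. For $A\subseteq B\subseteq X$ with inclusion $\iota:\vec\pi_1(X,A)\to\vec\pi_1(X,B)$, a future retract is a functor $P:\vec\pi_1(X,B)\to\vec\pi_1(X,A)$ left adjoint to $\iota$ whose unit satisfies $\eta_a=\mathrm{id}_a$ for $a\in A$. Van Kampen setup: $X$ a d-space, $X_1,X_2\subseteq X$ with $X=\mathrm{Int}(X_1)\cup\mathrm{Int}(X_2)$, dipaths of $X$ the finite concatenations of dipaths of $X_1$ and $X_2$, $X_0=X_1\cap X_2$. For $k=0,1,2$, $A_k\subseteq B_k\subseteq X_k$ with $A_0=A_1\cap A_2$, $B_0=B_1\cap B_2$, $A=A_1\cup A_2$, $B=B_1\cup B_2$, $A=\mathrm{Int}_A(A_1)\cup\mathrm{Int}_A(A_2)$, $B=\mathrm{Int}_B(B_1)\cup\mathrm{Int}_B(B_2)$. Inclusion-induced functors: $i_k:\vec\pi_1(X_0,B_0)\to\vec\pi_1(X_k,B_k)$, $j_k:\vec\pi_1(X_k,B_k)\to\vec\pi_1(X,B)$, $i'_k:\vec\pi_1(X_0,A_0)\to\vec\pi_1(X_k,A_k)$,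 $j'_k:\vec\pi_1(X_k,A_k)\to\vec\pi_1(X,A)$ ($k=1,2$). Compatible future retracts $Q_k:\vec\pi_1(X_k)\to\vec\pi_1(X_k,B_k)$: each a future retract with unit $\theta^k$, commuting with the inclusion-induced functors from index $0$ to $k=1,2$, with $\theta^0_x$ mapping to $\theta^k_x$ for $x\in X_0$. Compatible future retracts $P_k:\vec\pi_1(X_k,B_k)\to\vec\pi_1(X_k,A_k)$: each a future retract with unit $\eta^k$, $P_k\circ i_k=i'_k\circ P_0$ ($k=1,2$), and $\eta^0_x$ mapping to $\eta^k_x$ for $x\in B_0$. *)

From Stdlib Require Import Reals Lra Relations.
From Stdlib Require Import ProofIrrelevance IndefiniteDescription.
Set Implicit Arguments.
Open Scope R_scope.

Definition I := {t : R | 0 <= t <= 1}.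
Definition val (t : I) : R := proj1_sig t.

Lemma I_ext (s t : I) : val s = val t -> s = t.
Proof. destruct s, t; unfold val; simpl; intros ->; f_equal; apply proof_irrelevance. Qed.

Lemma clamp_in (r : R) : 0 <= Rmin 1 (Rmax 0 r) <= 1.
Proof. unfold Rmin, Rmax; repeat destruct Rle_dec; lra. Qed.

Definition mkI (r : R) : I := exist _ (Rmin 1 (Rmax 0 r)) (clamp_in r).

Lemma I0_pf : 0 <= 0 <= 1. Proof. lra. Qed.
Lemma I1_pf : 0 <= 1 <= 1. Proof. lra. Qed.
Definition I0 : I := exist _ 0 I0_pf.
Definition I1 : I := exist _ 1 I1_pf.

Definition continuousII (phi : I -> I) : Prop :=
  forall t eps, eps > 0 -> exists del, del > 0 /\
    forall t', Rabs (val t' - val t) < del -> Rabs (val (phi t') - val (phi t)) < eps.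
Definition nondecreasing (phi : I -> I) : Prop :=
  forall s t, val s <= val t -> val (phi s) <= val (phi t).

Definition concat {T : Type} (g d : I -> T) : I -> T := fun t =>
  match Rle_dec (val t) (1/2) with
  | left _ => g (mkI (2 * val t))
  | right _ => d (mkI (2 * val t - 1))
  end.

Definition piece {T : Type} (g : I -> T) (s t : R) : I -> T :=
  fun u => g (mkI (s + (t - s) * val u)).

Definition continuousI {T : Type} (isOpen : (T -> Prop) -> Prop) (g : I -> T) : Prop :=
  forall U, isOpen U -> forall t, U (g t) ->
    exists eps, eps > 0 /\ forall t', Rabs (val t' - val t) < eps -> U (g t').

Record dspace := {
  pt : Type;
  isOpen : (pt -> Prop) -> Prop;
  open_full : isOpen (fun _ => True);
  open_inter : forall U V, isOpen U -> isOpen V -> isOpen (fun x => U x /\ V x);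
  open_union : forall F : (pt -> Prop) -> Prop, (forall U, F U -> isOpen U) ->
                 isOpen (fun x => exists U, F U /\ U x);
  dpath : (I -> pt) -> Prop;
  dpath_cont : forall g, dpath g -> continuousI isOpen g;
  dpath_const : forall x, dpath (fun _ => x);
  dpath_reparam : forall g phi, dpath g -> continuousII phi -> nondecreasing phi ->
                    dpath (fun t => g (phi t));
  dpath_concat : forall g d, dpath g -> dpath d -> g I1 = d I0 -> dpath (concat g d)
}.

Section FC.
Variable D : dspace.

Definition Int (U : pt D -> Prop) (x : pt D) : Prop :=
  exists V, isOpen D V /\ V x /\ forall y, V y -> U y.
Definition IntRel (W U : pt D -> Prop) (x : pt D) : Prop :=
  W x /\ U x /\ exists V, isOpen D V /\ V x /\ forall y, W y -> V y -> U y.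

Definition dpathS (S : pt D -> Prop) (g : I -> pt D) : Prop :=
  dpath D g /\ forall t, S (g t).

(* endpoint-fixing directed homotopy in S from g to d: a d-map
   (up-I) x (up-I) -> S, i.e. jointly continuous and sending pairs of
   continuous non-decreasing reparametrizations to dipaths *)
Definition dihom (S : pt D -> Prop) (g d : I -> pt D) : Prop :=
  exists H : I -> I -> pt D,
    (forall U, isOpen D U -> forall t s, U (H t s) ->
       exists eps, eps > 0 /\ forall t' s', Rabs (val t' - val t) < eps ->
         Rabs (val s' - val s) < eps -> U (H t' s')) /\
    (forall u v : I -> I, continuousII u -> nondecreasing u ->
       continuousII v -> nondecreasing v -> dpath D (fun r => H (u r) (v r))) /\
    (forall t s, S (H t s)) /\
    (forall t, H t I0 = g t) /\ (forall t, H t I1 = d t) /\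
    (forall s, H I0 s = g I0) /\ (forall s, H I1 s = g I1).

Definition equivS (S : pt D -> Prop) : relation (I -> pt D) :=
  clos_refl_sym_trans _ (dihom S).

Definition Hom (S : pt D -> Prop) (a b : pt D) : Type :=
  {C : (I -> pt D) -> Prop | exists g, dpathS S g /\ g I0 = a /\ g I1 = b /\ C = equivS S g}.

Definition Ob (S A : pt D -> Prop) : Type := {x : pt D | S x /\ A x}.
Definition ov {S A : pt D -> Prop} (x : Ob S A) : pt D := proj1_sig x.
Definition ovS {S A : pt D -> Prop} (x : Ob S A) : S (ov x) := proj1 (proj2_sig x).

Definition idm (S : pt D -> Prop) (x : pt D) (hx : S x) : Hom S x x.
Proof.
  refine (exist _ (equivS S (fun _ => x)) _).
  exists (fun _ => x). split; [split; [apply dpath_const | intros; exact hx] |].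
  repeat split.
Defined.

Lemma concat_I0 {T : Type} (g d : I -> T) : concat g d I0 = g I0.
Proof.
  unfold concat; simpl. destruct Rle_dec as [h|h]; [|unfold val in h; simpl in h; lra].
  f_equal; apply I_ext; unfold val; simpl.
  unfold Rmin, Rmax; repeat destruct Rle_dec; lra.
Qed.

Lemma concat_I1 {T : Type} (g d : I -> T) : concat g d I1 = d I1.
Proof.
  unfold concat; simpl. destruct Rle_dec as [h|h]; [unfold val in h; simpl in h; lra|].
  f_equal; apply I_ext; unfold val; simpl.
  unfold Rmin, Rmax; repeat destruct Rle_dec; lra.
Qed.

Definition comp (S : pt D -> Prop) {a b c : pt D} (f : Hom S a b) (h : Hom S b c) : Hom S a c.
Proof.
  destruct (constructive_indefinite_description _ (proj2_sig f)) as [g [[g1 g2] [ga [gb _]]]].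
  destruct (constructive_indefinite_description _ (proj2_sig h)) as [d [[d1 d2] [db [dc _]]]].
  refine (exist _ (equivS S (concat g d)) _).
  exists (concat g d). split; [split|].
  - apply dpath_concat; auto. congruence.
  - intro t; unfold concat; destruct Rle_dec; auto.
  - rewrite concat_I0, concat_I1. auto.
Defined.

End FC.

Arguments Hom {D}.
Arguments Ob {D}.
Arguments idm {D S x}.
Arguments comp {D S a b c}.
Arguments ov {D S A}.
Arguments ovS {D S A}.
Arguments dpathS {D}.
Arguments Int {D}.
Arguments IntRel {D}.

Record functor (D : dspace) (S A S' A' : pt D -> Prop) := {
  fo : Ob S A -> Ob S' A';
  fm : forall a b : Ob S A, Hom S (ov a) (ov b) -> Hom S' (ov (fo a)) (ov (fo b));
  fm_id : forall a, fm a a (idm (ovS a)) = idm (ovS (fo a));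
  fm_comp : forall a b c (f : Hom S (ov a) (ov b)) (g : Hom S (ov b) (ov c)),
      fm a c (comp f g) = comp (fm a b f) (fm b c g)
}.
Arguments fo {D S A S' A'}.
Arguments functor {D}.
Arguments fm {D S A S' A'} _ {a b}.

Definition IsIncl {D : dspace} {S A S' A' : pt D -> Prop} (F : functor S A S' A') : Prop :=
  (forall x, ov (fo F x) = ov x) /\
  (forall a b (f : Hom S (ov a) (ov b)) g, proj1_sig f g -> proj1_sig (fm F f) g).

Definition FunEqC {D : dspace} {S1 A1 S2 A2 S3 A3 S4 A4 : pt D -> Prop}
  (F1 : functor S1 A1 S2 A2) (F2 : functor S2 A2 S4 A4)
  (G1 : functor S1 A1 S3 A3) (G2 : functor S3 A3 S4 A4) : Prop :=
  (forall x, ov (fo F2 (fo F1 x)) = ov (fo G2 (fo G1 x))) /\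
  (forall a b (f : Hom S1 (ov a) (ov b)),
      proj1_sig (fm F2 (fm F1 f)) = proj1_sig (fm G2 (fm G1 f))).

Definition Adjunction {D : dspace} {S A S' A' : pt D -> Prop}
  (L : functor S A S' A') (R : functor S' A' S A)
  (eta : forall c : Ob S A, Hom S (ov c) (ov (fo R (fo L c))))
  (eps : forall d : Ob S' A', Hom S' (ov (fo L (fo R d))) (ov d)) : Prop :=
  (forall c c' (f : Hom S (ov c) (ov c')), comp f (eta c') = comp (eta c) (fm R (fm L f))) /\
  (forall d d' (g : Hom S' (ov d) (ov d')), comp (fm L (fm R g)) (eps d') = comp (eps d) g) /\
  (forall c, comp (fm L (eta c)) (eps (fo L c)) = idm (ovS (fo L c))) /\
  (forall d, comp (eta (fo R d)) (fm R (eps d)) = idm (ovS (fo R d))).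

Definition FutureRetract {D : dspace} {S A B : pt D -> Prop}
  (P : functor S B S A) (iota : functor S A S B)
  (eta : forall c : Ob S B, Hom S (ov c) (ov (fo iota (fo P c))))
  (eps : forall d : Ob S A, Hom S (ov (fo P (fo iota d))) (ov d)) : Prop :=
  IsIncl iota /\ Adjunction P iota eta eps /\
  (forall a : Ob S B, A (ov a) -> proj1_sig (eta a) = proj1_sig (idm (ovS a))).

Definition Tt {T : Type} : T -> Prop := fun _ => True.

Definition inter {T : Type} (U V : T -> Prop) : T -> Prop := fun x => U x /\ V x.
Definition union {T : Type} (U V : T -> Prop) : T -> Prop := fun x => U x \/ V x.

Definition GeneratedBy (D : dspace) (X1 X2 : pt D -> Prop) : Prop :=
  forall g : I -> pt D, dpath D g <->
    exists (n : nat) (ts : nat -> R), ts 0%nat = 0 /\ ts n = 1 /\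
      forall i, (i < n)%nat -> ts i < ts (S i) /\
        (dpathS X1 (piece g (ts i) (ts (S i))) \/ dpathS X2 (piece g (ts i) (ts (S i)))).

(* Proof.
   (1) Generation: every morphism of π(X, B) is a composite of images of j1
       and j2.  A representing dipath is cut into pieces lying in X1 or X2;
       each piece g is moved along the units θ of the Q_k at its endpoints
       (g.θ ~ θ.Q_k(g)), and θ is an identity at the endpoints, which lie in B.
   (2) Gluing: the units of P1 and P2 agree on B0 (through P0), so they define
       a unit of P; P fixes A, so the counit is an identity.  Naturality of the
       unit holds on generators (naturality for the P_k), hence everywhere by
       (1); the triangle identities reduce to the facts that the counits of
       the P_k are identities and that P_k sends its units to identities. *)

From Pilot Require Import Defs.
From Stdlib Require Import Reals Lra Lia Psatz Relations.
From Stdlib Require Import ProofIrrelevance FunctionalExtensionality.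
From Stdlib Require Import IndefiniteDescription PropExtensionality.
Import Defs.
Set Implicit Arguments.
Unset Strict Implicit.
Open Scope R_scope.

Lemma val_bd (t : I) : 0 <= val t <= 1.
Proof. destruct t; unfold val; simpl; auto. Qed.

Lemma val_mkI (r : R) : 0 <= r <= 1 -> val (mkI r) = r.
Proof. intros; unfold mkI, val; simpl; unfold Rmin, Rmax; repeat destruct Rle_dec; lra. Qed.

Lemma mkI_val (t : I) : mkI (val t) = t.
Proof. apply I_ext; rewrite val_mkI; auto using val_bd. Qed.

Lemma mkI_eq (a b : R) : a = b -> mkI a = mkI b.
Proof. intros ->; auto. Qed.

Lemma mkI_lip (a b : R) : Rabs (val (mkI a) - val (mkI b)) <= Rabs (a - b).
Proof. unfold mkI, val; simpl; unfold Rmin, Rmax, Rabs;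
  repeat destruct Rle_dec; repeat destruct Rcase_abs; lra. Qed.

Lemma mkI_mono (a b : R) : a <= b -> val (mkI a) <= val (mkI b).
Proof. unfold mkI, val; simpl; unfold Rmin, Rmax; repeat destruct Rle_dec; lra. Qed.

Lemma mkI0 : mkI 0 = I0. Proof. apply I_ext; rewrite val_mkI; simpl; lra. Qed.
Lemma mkI1 : mkI 1 = I1. Proof. apply I_ext; rewrite val_mkI; simpl; unfold val; simpl; lra. Qed.

Lemma concat_l {T} (a b : I -> T) t : val t <= 1/2 -> concat a b t = a (mkI (2 * val t)).
Proof. intros h; unfold concat; destruct Rle_dec; [auto|lra]. Qed.
Lemma concat_r {T} (a b : I -> T) t : val t > 1/2 -> concat a b t = b (mkI (2 * val t - 1)).
Proof. intros h; unfold concat; destruct Rle_dec; [lra|auto]. Qed.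

Definition LipM (f : R -> R) : Prop :=
  (exists L, 0 <= L /\ forall x y, 0 <= x <= 1 -> 0 <= y <= 1 -> Rabs (f x - f y) <= L * Rabs (x - y)) /\
  (forall x y, 0 <= x <= 1 -> 0 <= y <= 1 -> x <= y -> f x <= f y).

Definition rp (f : R -> R) (t : I) : I := mkI (f (val t)).

Lemma rp_cont f : LipM f -> continuousII (rp f).
Proof.
  intros [[L [hL hl]] _] t eps he.
  exists (eps / (L + 1)). split. apply Rdiv_lt_0_compat; lra.
  intros t' ht. unfold rp. eapply Rle_lt_trans. apply mkI_lip.
  eapply Rle_lt_trans. apply hl; apply val_bd.
  apply Rle_lt_trans with ((L+1) * Rabs (val t' - val t)).
  apply Rmult_le_compat_r. apply Rabs_pos. lra.
  apply Rlt_le_trans with ((L + 1) * (eps / (L+1))).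
  apply Rmult_lt_compat_l; lra. right; field; lra.
Qed.

Lemma rp_mono f : LipM f -> nondecreasing (rp f).
Proof. intros [_ hm] s t h. unfold rp. apply mkI_mono. apply hm; auto using val_bd. Qed.

Lemma dpath_rp (D : dspace) g f : dpath D g -> LipM f -> dpath D (fun t => g (rp f t)).
Proof. intros; apply dpath_reparam; auto using rp_cont, rp_mono. Qed.

Lemma LipM_lin k c : 0 <= k -> LipM (fun x => k * x + c).
Proof.
  intros hk. split. exists k. split; auto. intros x y _ _.
  replace (k*x+c - (k*y+c)) with (k*(x-y)) by ring. rewrite Rabs_mult, (Rabs_pos_eq k) by lra. lra.
  intros; nra.
Qed.

Lemma LipM_id : LipM (fun x => x).
Proof.
  assert (E : (fun x => x) = (fun x => 1 * x + 0)) by (extensionality x; ring).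
  rewrite E; apply LipM_lin; lra.
Qed.

Lemma LipM_min f g : LipM f -> LipM g -> LipM (fun x => Rmin (f x) (g x)).
Proof.
  intros [[L1 [h1 l1]] m1] [[L2 [h2 l2]] m2]. split.
  - exists (L1 + L2). split. lra. intros x y hx hy.
    specialize (l1 x y hx hy). specialize (l2 x y hx hy).
    pose proof (Rabs_pos (x-y)).
    revert l1 l2. unfold Rmin, Rabs. repeat destruct Rle_dec; repeat destruct Rcase_abs; intros; nra.
  - intros x y hx hy hxy. specialize (m1 x y hx hy hxy). specialize (m2 x y hx hy hxy).
    unfold Rmin. repeat destruct Rle_dec; lra.
Qed.

Lemma LipM_max f g : LipM f -> LipM g -> LipM (fun x => Rmax (f x) (g x)).
Proof.
  intros [[L1 [h1 l1]] m1] [[L2 [h2 l2]] m2]. split.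
  - exists (L1 + L2). split. lra. intros x y hx hy.
    specialize (l1 x y hx hy). specialize (l2 x y hx hy).
    pose proof (Rabs_pos (x-y)).
    revert l1 l2. unfold Rmax, Rabs. repeat destruct Rle_dec; repeat destruct Rcase_abs; intros; nra.
  - intros x y hx hy hxy. specialize (m1 x y hx hy hxy). specialize (m2 x y hx hy hxy).
    unfold Rmax. repeat destruct Rle_dec; lra.
Qed.

Lemma LipM_range f : LipM f -> f 0 = 0 -> f 1 = 1 -> forall x, 0 <= x <= 1 -> 0 <= f x <= 1.
Proof. intros [_ hm] h0 h1 x hx. split.
  rewrite <- h0; apply hm; lra. rewrite <- h1; apply hm; lra. Qed.

Definition Lip2 (psi : R -> R -> R) : Prop :=
  (exists K, 0 <= K /\ forall x y x' y', 0 <= x <= 1 -> 0 <= y <= 1 -> 0 <= x' <= 1 -> 0 <= y' <= 1 ->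
     Rabs (psi x' y' - psi x y) <= K * (Rabs (x' - x) + Rabs (y' - y))) /\
  (forall x y x' y', 0 <= x <= 1 -> 0 <= y <= 1 -> 0 <= x' <= 1 -> 0 <= y' <= 1 ->
     x <= x' -> y <= y' -> psi x y <= psi x' y').

Lemma Lip2_small psi : Lip2 psi -> forall e, e > 0 -> exists d, d > 0 /\
  forall t s t' s' : I, Rabs (val t' - val t) < d -> Rabs (val s' - val s) < d ->
    Rabs (val (mkI (psi (val t') (val s'))) - val (mkI (psi (val t) (val s)))) < e.
Proof.
  intros [[K [hK hl]] _] e he. exists (e / (2 * K + 1)). split. apply Rdiv_lt_0_compat; lra.
  intros t s t' s' ht hs. eapply Rle_lt_trans. apply mkI_lip.
  eapply Rle_lt_trans. apply hl; apply val_bd.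
  apply Rle_lt_trans with (K * (2 * (e / (2 * K + 1)))).
  apply Rmult_le_compat_l; lra.
  apply Rlt_le_trans with ((2 * K + 1) * (e / (2 * K + 1))).
  assert (0 < e / (2 * K + 1)) by (apply Rdiv_lt_0_compat; lra). nra.
  right; field; lra.
Qed.

Lemma dihom_Lip2 (D : dspace) (S : pt D -> Prop) g psi : dpathS S g -> Lip2 psi ->
  (forall s, 0 <= s <= 1 -> psi 0 s = 0) -> (forall s, 0 <= s <= 1 -> psi 1 s = 1) ->
  dihom D S (fun t => g (mkI (psi (val t) 0))) (fun t => g (mkI (psi (val t) 1))).
Proof.
  intros [gd gS] hpsi h0 h1.
  exists (fun t s => g (mkI (psi (val t) (val s)))).
  split; [|split; [|split; [|split; [|split; [|split]]]]]; try reflexivity.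
  - intros U hU t s hUs.
    destruct (dpath_cont D g gd U hU _ hUs) as [e [he hE]].
    destruct (Lip2_small hpsi he) as [d [hd hD]].
    exists d. split; auto.
  - intros u v cu mu cv mv.
    apply dpath_reparam with (phi := fun r => mkI (psi (val (u r)) (val (v r)))); auto.
    + intros r e he. destruct (Lip2_small hpsi he) as [d [hd hD]].
      destruct (cu r d hd) as [d1 [hd1 H1]]. destruct (cv r d hd) as [d2 [hd2 H2]].
      exists (Rmin d1 d2). split. apply Rmin_glb_lt; auto.
      intros r' hr. apply hD.
      apply H1. eapply Rlt_le_trans; [apply hr|apply Rmin_l].
      apply H2. eapply Rlt_le_trans; [apply hr|apply Rmin_r].
    + intros r r' h. apply mkI_mono. apply (proj2 hpsi); try apply val_bd; auto.
  - intros; apply gS.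
  - intros s. simpl. rewrite (h0 _ (val_bd s)), h0 by lra. reflexivity.
  - intros s. simpl. rewrite (h1 _ (val_bd s)), h1 by lra. reflexivity.
Qed.

Lemma dihom_rep (D : dspace) (S : pt D -> Prop) g f0 f1 :
  dpathS S g -> LipM f0 -> LipM f1 -> f0 0 = 0 -> f0 1 = 1 -> f1 0 = 0 -> f1 1 = 1 ->
  (forall x, 0 <= x <= 1 -> f0 x <= f1 x) ->
  dihom D S (fun t => g (rp f0 t)) (fun t => g (rp f1 t)).
Proof.
  intros hg hf0 hf1 a0 b0 a1 b1 hle.
  pose proof (LipM_range hf0 a0 b0) as r0. pose proof (LipM_range hf1 a1 b1) as r1.
  destruct hf0 as [[L0 [hL0 l0]] m0]. destruct hf1 as [[L1 [hL1 l1]] m1].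
  set (psi := fun x y => (1 - y) * f0 x + y * f1 x).
  assert (hpsi : Lip2 psi).
  { split.
    - exists (L0 + L1 + 1). split. lra. intros x y x' y' hx hy hx' hy'. unfold psi.
      replace ((1 - y') * f0 x' + y' * f1 x' - ((1 - y) * f0 x + y * f1 x)) with
        ((1 - y') * (f0 x' - f0 x) + y' * (f1 x' - f1 x) + (y' - y) * (f1 x - f0 x)) by ring.
      pose proof (l0 x' x hx' hx). pose proof (l1 x' x hx' hx).
      pose proof (hle x hx). pose proof (r0 x hx). pose proof (r1 x hx).
      eapply Rle_trans. apply Rabs_triang. eapply Rle_trans. apply Rplus_le_compat_r. apply Rabs_triang.
      rewrite !Rabs_mult, (Rabs_pos_eq (1 - y')), (Rabs_pos_eq y'), (Rabs_pos_eq (f1 x - f0 x)) by lra.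
      pose proof (Rabs_pos (x' - x)). pose proof (Rabs_pos (y' - y)).
      pose proof (Rabs_pos (f0 x' - f0 x)). pose proof (Rabs_pos (f1 x' - f1 x)). nra.
    - intros x y x' y' hx hy hx' hy' hxx hyy. unfold psi.
      pose proof (m0 _ _ hx hx' hxx). pose proof (m1 _ _ hx hx' hxx). pose proof (hle x' hx'). nra. }
  assert (E0 : (fun t => g (rp f0 t)) = (fun t => g (mkI (psi (val t) 0)))).
  { extensionality t. unfold rp, psi. f_equal. apply mkI_eq. ring. }
  assert (E1 : (fun t => g (rp f1 t)) = (fun t => g (mkI (psi (val t) 1)))).
  { extensionality t. unfold rp, psi. f_equal. apply mkI_eq. ring. }
  rewrite E0, E1. apply dihom_Lip2; auto; intros s hs; unfold psi.
  rewrite a0, a1; ring. rewrite b0, b1; ring.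
Qed.

Lemma dihom_dpath (D : dspace) S g h : dihom D S g h ->
  dpathS S g /\ dpathS S h /\ g I0 = h I0 /\ g I1 = h I1.
Proof.
  intros [H [_ [hd [hS [h0 [h1 [e0 e1]]]]]]].
  assert (cid : continuousII (fun t => t)) by (intros t e he; exists e; split; auto).
  assert (mid : nondecreasing (fun t => t)) by (intros s t; auto).
  assert (cc : forall c : I, continuousII (fun _ => c)).
  { intros c t e he; exists 1; split; [lra|]. intros; rewrite Rminus_diag, Rabs_R0; auto. }
  assert (mc : forall c : I, nondecreasing (fun _ => c)) by (intros c s t _; lra).
  assert (side : forall c : I, dpathS S (fun t => H t c)).
  { intros c; split; auto. }
  replace g with (fun t => H t I0) by (extensionality t; auto).
  replace h with (fun t => H t I1) by (extensionality t; auto).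
  repeat split; try apply side; congruence.
Qed.

Lemma equiv_ends (D : dspace) S g h : equivS D S g h -> g I0 = h I0 /\ g I1 = h I1.
Proof.
  induction 1 as [g h H|g|g h _ [? ?]|g h k _ [? ?] _ [? ?]].
  - destruct (dihom_dpath H) as [_ [_ ?]]; auto.
  - auto.
  - auto.
  - split; congruence.
Qed.

Lemma equiv_dpath (D : dspace) S g h : equivS D S g h -> dpathS S g -> dpathS S h.
Proof.
  intros E. cut (dpathS S g <-> dpathS S h); [tauto|].
  induction E as [g h H| | |]; try tauto.
  destruct (dihom_dpath H) as [? [? _]]; tauto.
Qed.

Lemma equiv_mono (D : dspace) (S S' : pt D -> Prop) g h : (forall x, S x -> S' x) ->
  equivS D S g h -> equivS D S' g h.
Proof.
  intros hs E; induction E as [g h H| | |].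
  - apply rst_step. destruct H as [H' [a [b [c d]]]]. exists H'; repeat split; try tauto.
    intros; apply hs; apply c.
  - apply rst_refl.
  - apply rst_sym; auto.
  - eapply rst_trans; eauto.
Qed.

Lemma equiv_Tt (D : dspace) S g h : equivS D S g h -> equivS D Tt g h.
Proof. apply equiv_mono. intros; exact Logic.I. Qed.

Lemma dpathS_Tt (D : dspace) S g : dpathS S g -> dpathS (D:=D) Tt g.
Proof. intros [h _]. split; auto. intros; exact Logic.I. Qed.

(* any reparametrization fixing the endpoints: pass through [min id f] *)
Lemma equiv_rep (D : dspace) S g f : dpathS S g -> LipM f -> f 0 = 0 -> f 1 = 1 ->
  equivS D S g (fun t => g (rp f t)).
Proof.
  intros hg hf h0 h1.
  pose proof (LipM_min LipM_id hf) as hm.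
  assert (Eid : (fun t => g (rp (fun x => x) t)) = g).
  { extensionality t. unfold rp. rewrite mkI_val. auto. }
  assert (E1 : dihom D S (fun t => g (rp (fun x => Rmin x (f x)) t)) (fun t => g (rp (fun x => x) t))).
  { apply dihom_rep; auto using LipM_id; try rewrite h0; try rewrite h1; unfold Rmin;
      repeat destruct Rle_dec; try lra. intros; apply Rmin_l. }
  assert (E2 : dihom D S (fun t => g (rp (fun x => Rmin x (f x)) t)) (fun t => g (rp f t))).
  { apply dihom_rep; auto; try rewrite h0; try rewrite h1; unfold Rmin;
      repeat destruct Rle_dec; try lra. intros; apply Rmin_r. }
  rewrite Eid in E1.
  eapply rst_trans. apply rst_sym, rst_step, E1. apply rst_step, E2.
Qed.

Lemma LipM_affine a b : 0 <= a <= b -> LipM (fun x => a + (b - a) * x).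
Proof.
  intros h. assert (E : (fun x => a + (b - a) * x) = (fun x => (b - a) * x + a))
    by (extensionality x; ring).
  rewrite E. apply LipM_lin; lra.
Qed.

Lemma piece_dpath (D : dspace) g a b : 0 <= a <= b -> dpath D g -> dpath D (piece g a b).
Proof. intros h hg. exact (dpath_rp hg (LipM_affine h)). Qed.

Lemma piece_dpathS (D : dspace) S g a b : 0 <= a <= b -> dpathS S g -> dpathS (D:=D) S (piece g a b).
Proof. intros h [hg hs]. split. apply piece_dpath; auto. intros; apply hs. Qed.

Lemma glue (D : dspace) (rho : I -> pt D) r0 : 0 < r0 < 1 ->
  dpath D (piece rho 0 r0) -> dpath D (piece rho r0 1) -> dpath D rho.
Proof.
  intros hr h1 h2.
  set (c1 := / (2 * r0)). set (c2 := / (2 * (1 - r0))).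
  assert (e1 : c1 * r0 = 1/2) by (unfold c1; field; lra).
  assert (e2 : c2 * (1 - r0) = 1/2) by (unfold c2; field; lra).
  assert (p1 : c1 > 0) by (unfold c1; apply Rinv_0_lt_compat; lra).
  assert (p2 : c2 > 0) by (unfold c2; apply Rinv_0_lt_compat; lra).
  set (phi := fun x => if Rle_dec x r0 then c1 * x else 1/2 + c2 * (x - r0)).
  assert (hphi : LipM phi).
  { split. exists (c1 + c2). split. lra. intros x y hx hy. unfold phi.
    destruct Rle_dec; destruct Rle_dec; unfold Rabs; repeat destruct Rcase_abs; nra.
    intros x y hx hy hxy; unfold phi. destruct Rle_dec; destruct Rle_dec; nra. }
  assert (E : piece rho 0 r0 I1 = piece rho r0 1 I0).
  { unfold piece. f_equal. apply mkI_eq. simpl. ring. }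
  pose proof (dpath_rp (dpath_concat D _ _ h1 h2 E) hphi) as hh.
  replace rho with (fun t => concat (piece rho 0 r0) (piece rho r0 1) (rp phi t)); auto.
  extensionality t. pose proof (val_bd t).
  unfold rp, phi. destruct Rle_dec.
  - assert (hv : val (mkI (c1 * val t)) = c1 * val t) by (rewrite val_mkI; nra).
    rewrite concat_l by (rewrite hv; nra). rewrite hv. unfold piece.
    rewrite <- (mkI_val t) at 2. f_equal. apply mkI_eq. rewrite val_mkI by nra.
    replace (0 + (r0 - 0) * (2 * (c1 * val t))) with (2 * (c1 * r0) * val t) by ring.
    rewrite e1. lra.
  - assert (c2 * (val t - r0) <= c2 * (1 - r0)) by nra.
    assert (hv : val (mkI (1/2 + c2 * (val t - r0))) = 1/2 + c2 * (val t - r0))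
      by (rewrite val_mkI; nra).
    rewrite concat_r by (rewrite hv; nra). rewrite hv. unfold piece.
    rewrite <- (mkI_val t) at 2. f_equal. apply mkI_eq.
    rewrite val_mkI by nra. clearbody c1 c2. nra.
Qed.

Lemma cross (u : I -> I) : continuousII u -> val (u I0) < 1/2 -> 1/2 < val (u I1) ->
  exists r0, 0 < r0 < 1 /\ val (u (mkI r0)) = 1/2.
Proof.
  intros cu h0 h1.
  set (f := fun x => val (u (mkI x)) - 1/2).
  assert (cf : continuity f).
  { intros x e he. destruct (cu (mkI x) e he) as [d [hd hD]].
    exists d; split; auto. intros x' [_ hx']. simpl in *. unfold Rdist in *.
    unfold f. replace (val (u (mkI x')) - 1 / 2 - (val (u (mkI x)) - 1 / 2)) with
      (val (u (mkI x')) - val (u (mkI x))) by ring. apply hD.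
    eapply Rle_lt_trans. apply mkI_lip. auto. }
  destruct (IVT f 0 1 cf) as [z [hz fz]]. lra.
  unfold f; rewrite mkI0; lra. unfold f; rewrite mkI1; lra.
  exists z. unfold f in fz. split; [|lra].
  destruct (Req_dec z 0) as [e|e]. subst. rewrite mkI0 in fz. lra.
  destruct (Req_dec z 1) as [e'|e']. subst. rewrite mkI1 in fz. lra. lra.
Qed.

Lemma dpath_of_halves (D : dspace) (rho al be : I -> pt D) (u : I -> I) :
  continuousII u -> nondecreasing u -> dpath D al -> dpath D be ->
  (forall r, val (u r) <= 1/2 -> rho r = al r) -> (forall r, val (u r) >= 1/2 -> rho r = be r) ->
  dpath D rho.
Proof.
  intros cu mu hal hbe ra rb.
  destruct (Rle_dec (val (u I1)) (1/2)) as [q1|q1].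
  { replace rho with al; auto. extensionality r. symmetry; apply ra.
    eapply Rle_trans; [apply mu|exact q1]. apply val_bd. }
  destruct (Rle_dec (1/2) (val (u I0))) as [q2|q2].
  { replace rho with be; auto. extensionality r. symmetry; apply rb.
    apply Rle_ge. eapply Rle_trans; [exact q2|apply mu]. apply val_bd. }
  destruct (cross cu) as [r0 [hr0 hu0]]; try lra.
  apply glue with r0; auto.
  - replace (piece rho 0 r0) with (piece al 0 r0). apply piece_dpath; auto; lra.
    extensionality x. unfold piece. symmetry; apply ra.
    rewrite <- hu0. apply mu. apply mkI_mono. pose proof (val_bd x). nra.
  - replace (piece rho r0 1) with (piece be r0 1). apply piece_dpath; auto; lra.
    extensionality x. unfold piece. symmetry; apply rb.
    rewrite <- hu0. apply Rle_ge, mu. apply mkI_mono. pose proof (val_bd x). nra.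
Qed.
(** Concatenation is compatible with directed homotopy: two homotopies that
    agree along the junction can be placed side by side. *)

Definition jcont (D : dspace) (H : I -> I -> pt D) : Prop :=
  forall U, isOpen D U -> forall t s, U (H t s) ->
    exists eps, eps > 0 /\ forall t' s', Rabs (val t' - val t) < eps ->
      Rabs (val s' - val s) < eps -> U (H t' s').

Lemma jcont_concat (D : dspace) (H1 H2 : I -> I -> pt D) :
  jcont H1 -> jcont H2 -> (forall s, H1 I1 s = H2 I0 s) ->
  jcont (fun t s => concat (fun t => H1 t s) (fun t => H2 t s) t).
Proof.
  intros c1 c2 J U hU t s hK. pose proof (val_bd t) as bt.
  destruct (total_order_T (val t) (1/2)) as [[lt|eq]|gt].
  - rewrite concat_l in hK by lra.
    destruct (c1 U hU _ _ hK) as [e [he hE]].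
    exists (Rmin (e/2) (1/2 - val t)). split. apply Rmin_glb_lt; lra.
    intros t' s' ht hs. pose proof (Rmin_l (e/2) (1/2 - val t)). pose proof (Rmin_r (e/2) (1/2 - val t)).
    assert (val t' < 1/2) by (revert ht; unfold Rabs; destruct Rcase_abs; lra).
    rewrite concat_l by lra. apply hE; [|lra].
    eapply Rle_lt_trans. apply mkI_lip. revert ht; unfold Rabs; repeat destruct Rcase_abs; lra.
  - rewrite concat_l in hK by lra.
    replace (mkI (2 * val t)) with I1 in hK by (rewrite eq, <- mkI1; apply mkI_eq; lra).
    destruct (c1 U hU _ _ hK) as [ea [hea hEa]].
    rewrite J in hK. destruct (c2 U hU _ _ hK) as [eb [heb hEb]].
    exists (Rmin ea eb / 2). split. unfold Rmin; destruct Rle_dec; lra.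
    intros t' s' ht hs. pose proof (Rmin_l ea eb). pose proof (Rmin_r ea eb).
    destruct (Rle_dec (val t') (1/2)).
    + rewrite concat_l by lra. apply hEa; [|lra].
      rewrite <- mkI1. eapply Rle_lt_trans. apply mkI_lip.
      revert ht; rewrite eq; unfold Rabs; repeat destruct Rcase_abs; lra.
    + rewrite concat_r by lra. apply hEb; [|lra].
      rewrite <- mkI0. eapply Rle_lt_trans. apply mkI_lip.
      revert ht; rewrite eq; unfold Rabs; repeat destruct Rcase_abs; lra.
  - rewrite concat_r in hK by lra.
    destruct (c2 U hU _ _ hK) as [e [he hE]].
    exists (Rmin (e/2) (val t - 1/2)). split. apply Rmin_glb_lt; lra.
    intros t' s' ht hs. pose proof (Rmin_l (e/2) (val t - 1/2)). pose proof (Rmin_r (e/2) (val t - 1/2)).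
    assert (val t' > 1/2) by (revert ht; unfold Rabs; destruct Rcase_abs; lra).
    rewrite concat_r by lra. apply hE; [|lra].
    eapply Rle_lt_trans. apply mkI_lip. revert ht; unfold Rabs; repeat destruct Rcase_abs; lra.
Qed.

Lemma comp_cont (a b : I -> I) : continuousII a -> continuousII b -> continuousII (fun r => a (b r)).
Proof.
  intros ca cb t e he. destruct (ca (b t) e he) as [d1 [hd1 H1]].
  destruct (cb t d1 hd1) as [d2 [hd2 H2]]. exists d2; split; auto.
Qed.

Lemma comp_mono (a b : I -> I) : nondecreasing a -> nondecreasing b -> nondecreasing (fun r => a (b r)).
Proof. intros ma mb s t h; apply ma, mb, h. Qed.

Lemma dihom_concat (D : dspace) S g g' d d' : dihom D S g g' -> dihom D S d d' -> g I1 = d I0 ->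
  dihom D S (concat g d) (concat g' d').
Proof.
  intros [H1 [c1 [m1 [s1 [a1 [b1 [e1 f1]]]]]]] [H2 [c2 [m2 [s2 [a2 [b2 [e2 f2]]]]]]] hgd.
  assert (J : forall s, H1 I1 s = H2 I0 s) by (intros; rewrite f1, e2; auto).
  exists (fun t s => concat (fun t => H1 t s) (fun t => H2 t s) t).
  split; [|split; [|split; [|split; [|split; [|split]]]]].
  - exact (jcont_concat c1 c2 J).
  - intros u v cu mu cv mv.
    assert (hdbl : forall c, LipM (fun x => 2 * x + c)) by (intros; apply LipM_lin; lra).
    apply dpath_of_halves with
      (al := fun r => H1 (rp (fun x => 2 * x + 0) (u r)) (v r))
      (be := fun r => H2 (rp (fun x => 2 * x + -1) (u r)) (v r)) (u := u); auto.
    + apply m1; auto using comp_cont, comp_mono, rp_cont, rp_mono.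
    + apply m2; auto using comp_cont, comp_mono, rp_cont, rp_mono.
    + intros r h. unfold rp. rewrite concat_l by auto. f_equal. apply mkI_eq. ring.
    + intros r h. unfold rp. destruct (Rle_dec (val (u r)) (1/2)).
      * rewrite concat_l by auto. replace (val (u r)) with (1/2) by lra.
        replace (mkI (2 * (1/2))) with I1 by (rewrite <- mkI1; apply mkI_eq; lra).
        replace (mkI (2 * (1/2) + -1)) with I0 by (rewrite <- mkI0; apply mkI_eq; lra). apply J.
      * rewrite concat_r by lra. f_equal; apply mkI_eq; ring.
  - intros t s. unfold concat. destruct Rle_dec; auto.
  - intros t. unfold concat. destruct Rle_dec; auto.
  - intros t. unfold concat. destruct Rle_dec; auto.
  - intros s. rewrite !concat_I0. auto.
  - intros s. rewrite !concat_I1. auto.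
Qed.

Lemma dihom_refl (D : dspace) S d : dpathS S d -> dihom D S d d.
Proof.
  intros [hd hs]. exists (fun t s => d t).
  split; [|split; [|split; [|split; [|split; [|split]]]]]; auto.
  - intros U hU t s hK. destruct (dpath_cont D d hd U hU t hK) as [e [he hE]].
    exists e; split; auto.
  - intros u v cu mu cv mv. apply dpath_reparam; auto.
Qed.

Lemma concat_dpathS (D : dspace) S g d : dpathS S g -> dpathS S d -> g I1 = d I0 ->
  dpathS (D:=D) S (concat g d).
Proof.
  intros [hg sg] [hd sd] e. split. apply dpath_concat; auto.
  intros t; unfold concat; destruct Rle_dec; auto.
Qed.

Lemma equiv_concat_l (D : dspace) S g g' d : equivS D S g g' -> dpathS S d -> g I1 = d I0 ->
  equivS D S (concat g d) (concat g' d).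
Proof.
  intros E hd. induction E; intros e.
  - apply rst_step. apply dihom_concat; auto. apply dihom_refl; auto.
  - apply rst_refl.
  - apply rst_sym. apply IHE. destruct (equiv_ends E). congruence.
  - eapply rst_trans. apply IHE1; auto. apply IHE2. destruct (equiv_ends E1). congruence.
Qed.

Lemma equiv_concat_r (D : dspace) S g d d' : equivS D S d d' -> dpathS S g -> g I1 = d I0 ->
  equivS D S (concat g d) (concat g d').
Proof.
  intros E hg. induction E; intros e.
  - apply rst_step. apply dihom_concat; auto. apply dihom_refl; auto.
  - apply rst_refl.
  - apply rst_sym. apply IHE. destruct (equiv_ends E). congruence.
  - eapply rst_trans. apply IHE1; auto. apply IHE2. destruct (equiv_ends E1). congruence.
Qed.

Lemma equiv_concat (D : dspace) S g g' d d' : equivS D S g g' -> equivS D S d d' ->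
  dpathS S g -> dpathS S d -> g I1 = d I0 -> equivS D S (concat g d) (concat g' d').
Proof.
  intros E1 E2 hg hd e. eapply rst_trans. apply equiv_concat_l; eauto.
  apply equiv_concat_r; auto. eapply equiv_dpath; eauto. destruct (equiv_ends E1); congruence.
Qed.
(** The groupoid-like laws of concatenation up to [equivS]: each is a
    reparametrization fixing the endpoints, hence an instance of [equiv_rep]. *)

(* [concat (concat a b) c] is [concat a (concat b c)] reparametrized by [fA] *)
Definition fA (x : R) := Rmin (2 * x + 0) (Rmin (1 * x + 1/4) (1/2 * x + 1/2)).

Lemma concat_assoc_eq {T} (a b c : I -> T) :
  concat (concat a b) c = fun t => concat a (concat b c) (rp fA t).
Proof.
  extensionality t. pose proof (val_bd t). unfold rp, fA.
  destruct (Rle_dec (val t) (1/4)); [|destruct (Rle_dec (val t) (1/2))].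
  - replace (Rmin (2 * val t + 0) (Rmin (1 * val t + 1 / 4) (1 / 2 * val t + 1 / 2))) with (2 * val t)
      by (unfold Rmin; repeat destruct Rle_dec; lra).
    rewrite concat_l by lra. rewrite concat_l by (rewrite val_mkI; lra).
    rewrite concat_l by (rewrite val_mkI; lra). rewrite !val_mkI by lra. auto.
  - replace (Rmin (2 * val t + 0) (Rmin (1 * val t + 1 / 4) (1 / 2 * val t + 1 / 2))) with (val t + 1/4)
      by (unfold Rmin; repeat destruct Rle_dec; lra).
    rewrite concat_l by lra. rewrite (concat_r a b) by (rewrite val_mkI; lra).
    rewrite (concat_r a (concat b c)) by (rewrite val_mkI; lra).
    rewrite (@val_mkI (val t + 1/4)) by lra. rewrite concat_l by (rewrite val_mkI; lra).
    rewrite ?val_mkI by lra. f_equal; apply mkI_eq; lra.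
  - replace (Rmin (2 * val t + 0) (Rmin (1 * val t + 1 / 4) (1 / 2 * val t + 1 / 2))) with (1/2 * val t + 1/2)
      by (unfold Rmin; repeat destruct Rle_dec; lra).
    rewrite (concat_r (concat a b) c) by lra. rewrite (concat_r a (concat b c)) by (rewrite val_mkI; lra).
    rewrite (@val_mkI (1/2 * val t + 1/2)) by lra. rewrite concat_r by (rewrite val_mkI; lra).
    rewrite ?val_mkI by lra. f_equal; apply mkI_eq; lra.
Qed.

Lemma equiv_assoc (D : dspace) S a b c : dpathS S a -> dpathS S b -> dpathS S c ->
  a I1 = b I0 -> b I1 = c I0 ->
  equivS D S (concat (concat a b) c) (concat a (concat b c)).
Proof.
  intros ha hb hc e1 e2. rewrite concat_assoc_eq. apply rst_sym. apply equiv_rep.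
  - apply concat_dpathS; auto. apply concat_dpathS; auto. rewrite concat_I0; auto.
  - unfold fA. apply LipM_min. apply LipM_lin; lra. apply LipM_min; apply LipM_lin; lra.
  - unfold fA, Rmin; repeat destruct Rle_dec; lra.
  - unfold fA, Rmin; repeat destruct Rle_dec; lra.
Qed.

Lemma equiv_runit (D : dspace) S g : dpathS S g -> equivS D S (concat g (fun _ => g I1)) g.
Proof.
  intros hg. replace (concat g (fun _ => g I1)) with (fun t => g (rp (fun x => Rmin (2*x+0) (0*x+1)) t)).
  - apply rst_sym, equiv_rep; auto. apply LipM_min; apply LipM_lin; lra.
    unfold Rmin; repeat destruct Rle_dec; lra. unfold Rmin; repeat destruct Rle_dec; lra.
  - extensionality t. pose proof (val_bd t). unfold rp, concat. destruct Rle_dec.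
    + f_equal. apply mkI_eq. unfold Rmin; destruct Rle_dec; lra.
    + rewrite <- mkI1. f_equal. apply mkI_eq. unfold Rmin; destruct Rle_dec; lra.
Qed.

Lemma equiv_lunit (D : dspace) S g : dpathS S g -> equivS D S (concat (fun _ => g I0) g) g.
Proof.
  intros hg. replace (concat (fun _ => g I0) g) with (fun t => g (rp (fun x => Rmax (0*x+0) (2*x + -1)) t)).
  - apply rst_sym, equiv_rep; auto. apply LipM_max; apply LipM_lin; lra.
    unfold Rmax; repeat destruct Rle_dec; lra. unfold Rmax; repeat destruct Rle_dec; lra.
  - extensionality t. pose proof (val_bd t). unfold rp, concat. destruct Rle_dec.
    + rewrite <- mkI0. f_equal. apply mkI_eq. unfold Rmax; destruct Rle_dec; lra.
    + f_equal. apply mkI_eq. unfold Rmax; destruct Rle_dec; lra.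
Qed.

Definition fS (a x : R) := if Rle_dec x (1/2) then 2 * a * x else a + (1 - a) * (2 * x - 1).

Lemma equiv_split (D : dspace) S g a : dpathS S g -> 0 <= a <= 1 ->
  equivS D S g (concat (piece g 0 a) (piece g a 1)).
Proof.
  intros hg ha. replace (concat (piece g 0 a) (piece g a 1)) with (fun t => g (rp (fS a) t)).
  - apply equiv_rep; auto; [|unfold fS; destruct Rle_dec; lra..].
    split.
    + exists 2. split. lra. intros x y hx hy. unfold fS.
      destruct Rle_dec; destruct Rle_dec; unfold Rabs; repeat destruct Rcase_abs; nra.
    + intros x y hx hy hxy. unfold fS. destruct Rle_dec; destruct Rle_dec; nra.
  - extensionality t. pose proof (val_bd t). unfold rp, fS, concat, piece.
    destruct Rle_dec; f_equal; apply mkI_eq; rewrite val_mkI; try lra; try ring.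
Qed.

Definition mem {D : dspace} {S : pt D -> Prop} {a b : pt D} (f : Hom S a b) (g : I -> pt D) : Prop :=
  proj1_sig f g.

Lemma equiv_class_eq (D : dspace) S g h : equivS D S g h -> equivS D S g = equivS D S h.
Proof.
  intros E. extensionality k. apply propositional_extensionality.
  split; intro Hk; eapply rst_trans; eauto. apply rst_sym; exact E.
Qed.

Lemma mem_rep (D : dspace) S (a b : pt D) (f : Hom S a b) g : mem f g ->
  proj1_sig f = equivS D S g /\ dpathS S g /\ g I0 = a /\ g I1 = b.
Proof.
  destruct f as [C [g0 [h0 [e0 [e1 ->]]]]]. unfold mem; simpl. intros E.
  destruct (equiv_ends E) as [q0 q1].
  split; [apply equiv_class_eq; auto | split; [eapply equiv_dpath; eauto | split; congruence]].
Qed.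

Lemma mem_ex (D : dspace) S (a b : pt D) (f : Hom S a b) : exists g, mem f g.
Proof. destruct f as [C [g0 [h0 [e0 [e1 ->]]]]]. exists g0. apply rst_refl. Qed.

Lemma Hom_eq (D : dspace) S (a b : pt D) (f f' : Hom S a b) : proj1_sig f = proj1_sig f' -> f = f'.
Proof. destruct f, f'; simpl. intros ->. f_equal. apply proof_irrelevance. Qed.

Lemma Ob_eq (D : dspace) (S A : pt D -> Prop) (a a' : Ob S A) : ov a = ov a' -> a = a'.
Proof. destruct a, a'; unfold ov; simpl. intros ->. f_equal. apply proof_irrelevance. Qed.

Lemma mem_equiv (D : dspace) S (a b : pt D) (f : Hom S a b) g h : mem f g -> mem f h -> equivS D S g h.
Proof. intros m m'. destruct (mem_rep m) as [e _]. unfold mem in m'; rewrite e in m'; auto. Qed.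

Lemma class_ext (D : dspace) S (a b a' b' : pt D) (f : Hom S a b) (f' : Hom S a' b') g g' :
  mem f g -> mem f' g' -> equivS D S g g' -> proj1_sig f = proj1_sig f'.
Proof.
  intros m m' E. rewrite (proj1 (mem_rep m)), (proj1 (mem_rep m')). apply equiv_class_eq; auto.
Qed.

Lemma hom_eq_class (D : dspace) S (a b : pt D) (f f' : Hom S a b) g g' :
  mem f g -> mem f' g' -> equivS D S g g' -> f = f'.
Proof. intros m m' E. apply Hom_eq. eapply class_ext; eauto. Qed.

Lemma mem_comp (D : dspace) S (a b c : pt D) (f : Hom S a b) (h : Hom S b c) g d :
  mem f g -> mem h d -> mem (Defs.comp f h) (concat g d).
Proof.
  intros mf mh. unfold Defs.comp, mem.
  destruct (constructive_indefinite_description _ (proj2_sig f)) as [g' [[g1 g2] [ga [gb eg]]]].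
  destruct (constructive_indefinite_description _ (proj2_sig h)) as [d' [[d1 d2] [db [dc ed]]]].
  simpl. unfold mem in mf, mh. rewrite eg in mf. rewrite ed in mh.
  apply equiv_concat; [auto|auto|split;auto|split;auto|congruence].
Qed.

Lemma mem_idm (D : dspace) S (x : pt D) (hx : S x) : mem (idm hx) (fun _ => x).
Proof. apply rst_refl. Qed.

Lemma incl_mem (D : dspace) (S A S' A' : pt D -> Prop) (F : functor S A S' A') a b
  (f : Hom S (ov a) (ov b)) g : IsIncl F -> mem f g -> mem (fm F f) g.
Proof. intros [_ h] m. apply h; auto. Qed.

Lemma fm_class (D : dspace) (S A S' A' : pt D -> Prop) (F : functor S A S' A') a b a' b'
  (f : Hom S (ov a) (ov b)) (f' : Hom S (ov a') (ov b')) :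
  a = a' -> b = b' -> proj1_sig f = proj1_sig f' -> proj1_sig (fm F f) = proj1_sig (fm F f').
Proof. intros <- <- e. apply Hom_eq in e. subst. reflexivity. Qed.

Lemma comp_assoc (D : dspace) S (a b c e : pt D) (f : Hom S a b) (g : Hom S b c) (h : Hom S c e) :
  Defs.comp (Defs.comp f g) h = Defs.comp f (Defs.comp g h).
Proof.
  destruct (mem_ex f) as [x mx]. destruct (mem_ex g) as [y my]. destruct (mem_ex h) as [z mz].
  destruct (mem_rep mx) as [_ [dx [x0 x1]]]. destruct (mem_rep my) as [_ [dy [y0 y1]]].
  destruct (mem_rep mz) as [_ [dz [z0 z1]]].
  eapply hom_eq_class. apply mem_comp; [apply mem_comp|]; eauto. apply mem_comp; [|apply mem_comp]; eauto.
  apply equiv_assoc; auto; congruence.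
Qed.

Lemma idclass_pts (D : dspace) S (a b x : pt D) (f : Hom S a b) :
  proj1_sig f = equivS D S (fun _ => x) -> a = x /\ b = x.
Proof.
  intros E. destruct (mem_ex f) as [g m]. destruct (mem_rep m) as [e [_ [g0 g1]]].
  unfold mem in m. rewrite E in m. destruct (equiv_ends m). split; congruence.
Qed.

Lemma idclass_mem (D : dspace) S (a b x : pt D) (f : Hom S a b) :
  proj1_sig f = equivS D S (fun _ => x) -> mem f (fun _ => x).
Proof. intros E. unfold mem. rewrite E. apply rst_refl. Qed.

Definition mkHom (D : dspace) (S : pt D -> Prop) (g : I -> pt D) (hg : dpathS S g) : Hom S (g I0) (g I1) :=
  exist _ (equivS D S g) (ex_intro _ g (conj hg (conj eq_refl (conj eq_refl eq_refl)))).

Lemma mem_mkHom D S g hg : mem (@mkHom D S g hg) g.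
Proof. apply rst_refl. Qed.

Definition hom_of_eq (D : dspace) (S : pt D -> Prop) (a b : pt D) (hb : S b) (e : a = b) : Hom S a b :=
  exist _ (equivS D S (fun _ => b))
    (ex_intro _ (fun _ => b) (conj (conj (dpath_const D b) (fun _ => hb)) (conj (eq_sym e) (conj eq_refl eq_refl)))).

Definition oxx (D : dspace) (S : pt D -> Prop) (x : pt D) (hx : S x) : Ob S S := exist _ x (conj hx hx).
Arguments oxx {D S} x hx.

Lemma unit_naturality_paths (D : dspace) (S A S' A' : pt D -> Prop)
  (L : functor S A S' A') (R : functor S' A' S A) eta eps :
  Adjunction L R eta eps -> IsIncl R ->
  forall y y' (h : Hom S (ov y) (ov y')) g t t' p,
  mem h g -> mem (eta y') t' -> mem (eta y) t -> mem (fm L h) p ->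
  equivS D S (concat g t') (concat t p).
Proof.
  intros [nat _] hR y y' h g t t' p mh mt' mt mp.
  pose proof (mem_comp mh mt') as c1. rewrite (nat y y' h) in c1.
  exact (mem_equiv c1 (mem_comp mt (incl_mem hR mp))).
Qed.

Section FutureRetractFacts.
Variables (D : dspace) (S A B : pt D -> Prop).
Variables (P : functor S B S A) (k : functor S A S B).
Variables (eta : forall c : Ob S B, Hom S (ov c) (ov (fo k (fo P c))))
          (eps : forall d : Ob S A, Hom S (ov (fo P (fo k d))) (ov d)).
Hypothesis hP : FutureRetract P k eta eps.

Lemma retract_unit_on_A (y : Ob S B) : A (ov y) -> mem (eta y) (fun _ => ov y).
Proof. intros hy. apply idclass_mem. apply (proj2 (proj2 hP) y hy). Qed.

Lemma retract_fixes (y : Ob S B) : A (ov y) -> ov (fo P y) = ov y.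
Proof.
  intros hy. destruct (idclass_pts (proj2 (proj2 hP) y hy)) as [_ e].
  rewrite (proj1 (proj1 hP)) in e. exact e.
Qed.

(* the counit is an identity, by the triangle identity at [k d] *)
Lemma retract_counit_trivial (d : Ob S A) r : mem (eps d) r -> equivS D S r (fun _ => ov d).
Proof.
  intros mr. destruct hP as [hk [[_ [_ [_ tri]]] _]].
  assert (hA : A (ov (fo k d))) by (rewrite (proj1 hk); exact (proj2 (proj2_sig d))).
  pose proof (mem_comp (retract_unit_on_A hA) (incl_mem hk mr)) as mc.
  rewrite tri in mc. unfold mem in mc; simpl in mc.
  destruct (mem_rep mr) as [_ [dr [r0 _]]].
  rewrite (retract_fixes hA), (proj1 hk) in r0. rewrite (proj1 hk) in mc.
  eapply rst_trans. apply rst_sym, (equiv_lunit (D:=D) dr).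
  rewrite r0. apply rst_sym; auto.
Qed.

(* [P] sends every unit to an identity, by the other triangle identity *)
Lemma retract_image_unit_trivial (y : Ob S B) u :
  mem (fm P (eta y)) u -> equivS D S u (fun _ => ov (fo P y)).
Proof.
  intros mu. destruct hP as [hk [[_ [_ [tri _]]] _]].
  destruct (mem_ex (eps (fo P y))) as [v mv].
  pose proof (mem_comp mu mv) as c. rewrite tri in c. unfold mem in c; simpl in c.
  destruct (mem_rep mu) as [_ [du [_ u1]]].
  assert (hA : A (ov (fo k (fo P y)))) by (rewrite (proj1 hk); exact (proj2 (proj2_sig (fo P y)))).
  rewrite (retract_fixes hA), (proj1 hk) in u1.
  eapply rst_trans. apply rst_sym, (equiv_runit (D:=D) du).
  eapply rst_trans. apply equiv_concat_r. rewrite u1. apply rst_sym, retract_counit_trivial, mv.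
  auto. destruct (mem_rep mv) as [_ [_ [v0 _]]]. congruence.
  apply rst_sym, c.
Qed.

End FutureRetractFacts.

Lemma piece_piece {T} (g : I -> T) a b c d : 0 <= a <= b -> b <= 1 -> 0 <= c <= d -> d <= 1 ->
  piece (piece g a b) c d = piece g (a + (b-a)*c) (a + (b-a)*d).
Proof.
  intros h1 h2 h3 h4. extensionality u. pose proof (val_bd u).
  unfold piece. f_equal. apply mkI_eq. rewrite val_mkI by nra. ring.
Qed.

Lemma piece01 {T} (g : I -> T) : piece g 0 1 = g.
Proof. extensionality u. unfold piece. rewrite <- (mkI_val u) at 2. f_equal. apply mkI_eq. ring. Qed.

Lemma piece_I0 {T} (g : I -> T) a b : piece g a b I0 = g (mkI a).
Proof. unfold piece. f_equal. apply mkI_eq. simpl. ring. Qed.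
Lemma piece_I1 {T} (g : I -> T) a b : piece g a b I1 = g (mkI b).
Proof. unfold piece. f_equal. apply mkI_eq. simpl. ring. Qed.

Definition Dec (D : dspace) (X1 X2 : pt D -> Prop) (n : nat) (ts : nat -> R) (g : I -> pt D) : Prop :=
  ts 0%nat = 0 /\ ts n = 1 /\ forall i, (i < n)%nat -> ts i < ts (S i) /\
        (dpathS X1 (piece g (ts i) (ts (S i))) \/ dpathS X2 (piece g (ts i) (ts (S i)))).
Arguments Dec : clear implicits.

Lemma Dec_lt D X1 X2 n ts g : Dec D X1 X2 n ts g -> forall i j, (i < j)%nat -> (j <= n)%nat -> ts i < ts j.
Proof.
  intros [_ [_ h]] i j hij. induction hij; intros hn.
  - apply h; lia.
  - eapply Rlt_trans. apply IHhij; lia. apply h; lia.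
Qed.

Lemma Dec_bd D X1 X2 n ts g : Dec D X1 X2 n ts g -> forall i, (i <= n)%nat -> 0 <= ts i <= 1.
Proof.
  intros hd i hi. destruct hd as [h0 [h1 h]] eqn:E. split.
  - destruct i. lra. rewrite <- h0. left. apply (Dec_lt hd); lia.
  - destruct (Nat.eq_dec i n). subst; lra. rewrite <- h1. left. apply (Dec_lt hd); lia.
Qed.

Lemma Dec_shift D X1 X2 m ts g : Dec D X1 X2 (S (S m)) ts g ->
  Dec D X1 X2 (S m) (fun i => (ts (S i) - ts 1%nat) / (1 - ts 1%nat)) (piece g (ts 1%nat) 1).
Proof.
  intros hd. pose proof (Dec_bd hd) as hb. pose proof (Dec_lt hd) as hl.
  assert (t1 : 0 < ts 1%nat < 1).
  { destruct hd as [h0 [h1 _]]. split. rewrite <- h0. apply hl; lia. rewrite <- h1. apply hl; lia. }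
  destruct hd as [h0 [h1 h]]. split; [|split].
  - simpl. unfold Rdiv. rewrite Rminus_diag. ring.
  - rewrite h1. field. lra.
  - intros i hi. split.
    + apply Rmult_lt_compat_r. apply Rinv_0_lt_compat; lra. apply Rplus_lt_compat_r. apply h; lia.
    + assert (E : piece (piece g (ts 1%nat) 1) ((ts (S i) - ts 1%nat) / (1 - ts 1%nat))
                   ((ts (S (S i)) - ts 1%nat) / (1 - ts 1%nat)) = piece g (ts (S i)) (ts (S (S i)))).
      { assert (ts 1%nat <= ts (S i)). { destruct i. lra. left; apply hl; lia. }
        assert (ts (S i) < ts (S (S i))) by (apply h; lia).
        assert (ts (S (S i)) <= 1) by (apply hb; lia).
        rewrite piece_piece; try lra.
        f_equal; field; lra.
        split. apply Rmult_le_pos. lra. left; apply Rinv_0_lt_compat; lra.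
        apply Rmult_le_compat_r. left; apply Rinv_0_lt_compat; lra. lra.
        apply Rmult_le_reg_r with (1 - ts 1%nat). lra. unfold Rdiv. rewrite Rmult_assoc, Rinv_l by lra. lra. }
      rewrite E. apply h. lia.
Qed.

Inductive Gen (D : dspace) (X1 X2 B1 B2 : pt D -> Prop)
  (j1 : functor X1 B1 Tt (union B1 B2)) (j2 : functor X2 B2 Tt (union B1 B2)) :
  forall a b : Ob Tt (union B1 B2), Hom Tt (ov a) (ov b) -> Prop :=
| gen1 : forall y y' (h : Hom X1 (ov y) (ov y')), @Gen D X1 X2 B1 B2 j1 j2 (fo j1 y) (fo j1 y') (fm j1 h)
| gen2 : forall y y' (h : Hom X2 (ov y) (ov y')), @Gen D X1 X2 B1 B2 j1 j2 (fo j2 y) (fo j2 y') (fm j2 h)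
| genc : forall a b c f g, @Gen D X1 X2 B1 B2 j1 j2 a b f -> @Gen D X1 X2 B1 B2 j1 j2 b c g -> @Gen D X1 X2 B1 B2 j1 j2 a c (Defs.comp f g).
Arguments Gen {D X1 X2 B1 B2} j1 j2 a b f.

Definition RetK (D : dspace) (Xk Bk : pt D -> Prop) (Qk : functor Xk Xk Xk Bk)
  (kQk : functor Xk Bk Xk Xk) (thk : forall c, Hom Xk (ov c) (ov (fo kQk (fo Qk c))))
  (x q : pt D) (t : I -> pt D) : Prop :=
  exists hx : Xk x, q = ov (fo Qk (oxx x hx)) /\ mem (thk (oxx x hx)) t.

(* A dipath [g] of one side, flanked by the units of [Qk] at its ends, is
   equivalent to a unit followed by the generated morphism [jk (Qk g)]: this is
   the naturality of the unit of [Qk]. *)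
Lemma transport_side (D : dspace) (X1 X2 B1 B2 Xk Bk : pt D -> Prop)
  (j1 : functor X1 B1 Tt (union B1 B2)) (j2 : functor X2 B2 Tt (union B1 B2))
  (jk : functor Xk Bk Tt (union B1 B2)) (Qk : functor Xk Xk Xk Bk) (kQk : functor Xk Bk Xk Xk)
  (thk : forall c, Hom Xk (ov c) (ov (fo kQk (fo Qk c))))
  (tak : forall d, Hom Xk (ov (fo Qk (fo kQk d))) (ov d)) :
  IsIncl jk -> FutureRetract Qk kQk thk tak ->
  (forall y y' (h : Hom Xk (ov y) (ov y')), Gen j1 j2 (fo jk y) (fo jk y') (fm jk h)) ->
  forall g, dpathS Xk g -> forall q q' t t' (a b : Ob Tt (union B1 B2)),
  RetK thk (g I0) q t -> RetK thk (g I1) q' t' -> ov a = q -> ov b = q' ->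
  exists f : Hom Tt (ov a) (ov b), Gen j1 j2 a b f /\
    forall r, mem f r -> equivS D Tt (concat g t') (concat t r).
Proof.
  intros hjk [hkQ [adjQ _]] genk g hg q q' t t' a b [hx [eq mt]] [hx' [eq' mt']] ea eb.
  pose (h := mkHom hg : Hom Xk (ov (oxx (g I0) hx)) (ov (oxx (g I1) hx'))).
  assert (Ea : a = fo jk (fo Qk (oxx (g I0) hx))) by (apply Ob_eq; rewrite (proj1 hjk); congruence).
  assert (Eb : b = fo jk (fo Qk (oxx (g I1) hx'))) by (apply Ob_eq; rewrite (proj1 hjk); congruence).
  subst a b. exists (fm jk (fm Qk h)). split; [apply genk|].
  intros r mr. destruct (mem_ex (fm Qk h)) as [p mp].
  destruct (mem_rep mt) as [_ [dt [_ t1]]]. destruct (mem_rep mp) as [_ [_ [p0 _]]].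
  eapply rst_trans.
  - apply equiv_Tt with Xk. exact (unit_naturality_paths adjQ hkQ (mem_mkHom hg : mem h g) mt' mt mp).
  - apply equiv_concat_r. exact (equiv_Tt (mem_equiv (incl_mem hjk mp) mr)).
    exact (dpathS_Tt dt). rewrite t1, p0, (proj1 hkQ). auto.
Qed.

Section Generation.
Variables (D : dspace) (X1 X2 B1 B2 : pt D -> Prop).
Hypothesis hgen : GeneratedBy D X1 X2.
Hypotheses (hBX1 : forall x, B1 x -> X1 x) (hBX2 : forall x, B2 x -> X2 x).
Variables (j1 : functor X1 B1 Tt (union B1 B2)) (j2 : functor X2 B2 Tt (union B1 B2)).
Hypotheses (hj1 : IsIncl j1) (hj2 : IsIncl j2).
Variables (Q1 : functor X1 X1 X1 B1) (Q2 : functor X2 X2 X2 B2)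
  (kQ1 : functor X1 B1 X1 X1) (kQ2 : functor X2 B2 X2 X2)
  (th1 : forall c, Hom X1 (ov c) (ov (fo kQ1 (fo Q1 c))))
  (th2 : forall c, Hom X2 (ov c) (ov (fo kQ2 (fo Q2 c))))
  (ta1 : forall d, Hom X1 (ov (fo Q1 (fo kQ1 d))) (ov d))
  (ta2 : forall d, Hom X2 (ov (fo Q2 (fo kQ2 d))) (ov d)).
Hypotheses (hQ1 : FutureRetract Q1 kQ1 th1 ta1) (hQ2 : FutureRetract Q2 kQ2 th2 ta2).
Hypothesis hQc : forall x (h1 : X1 x) (h2 : X2 x),
  ov (fo Q1 (oxx x h1)) = ov (fo Q2 (oxx x h2)) /\
  exists w, mem (th1 (oxx x h1)) w /\ mem (th2 (oxx x h2)) w.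

Definition Ret (x q : pt D) (t : I -> pt D) : Prop := RetK th1 x q t \/ RetK th2 x q t.

Lemma Ret_path x q t : Ret x q t -> dpathS Tt t /\ t I0 = x /\ t I1 = q.
Proof.
  intros [[hx [-> mt]]|[hx [-> mt]]]; destruct (mem_rep mt) as [_ [dt [t0 t1]]];
    (split; [exact (dpathS_Tt dt)|split; auto]).
  - rewrite t1, (proj1 (proj1 hQ1)); auto.
  - rewrite t1, (proj1 (proj1 hQ2)); auto.
Qed.

(* by compatibility, a unit at a point of [X1] may be taken to be that of [Q1] *)
Lemma Ret_side1 x q t : X1 x -> Ret x q t -> exists t1, RetK th1 x q t1 /\ equivS D Tt t t1.
Proof.
  intros h1 [ht|[h2 [eq mt]]]; [exists t; split; auto; apply rst_refl|].
  destruct (hQc h1 h2) as [eQ [w [m1 m2]]].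
  exists w. split. exists h1. split; auto. congruence. exact (equiv_Tt (mem_equiv mt m2)).
Qed.

Lemma Ret_side2 x q t : X2 x -> Ret x q t -> exists t2, RetK th2 x q t2 /\ equivS D Tt t t2.
Proof.
  intros h2 [[h1 [eq mt]]|ht]; [|exists t; split; auto; apply rst_refl].
  destruct (hQc h1 h2) as [eQ [w [m1 m2]]].
  exists w. split. exists h2. split; auto. congruence. exact (equiv_Tt (mem_equiv mt m1)).
Qed.

Lemma Ret_exists x : X1 x \/ X2 x -> exists q t (b : Ob Tt (union B1 B2)), Ret x q t /\ ov b = q.
Proof.
  intros [hx|hx].
  - destruct (mem_ex (th1 (oxx x hx))) as [t mt].
    exists (ov (fo Q1 (oxx x hx))), t, (fo j1 (fo Q1 (oxx x hx))).
    split. left; exists hx; auto. apply (proj1 hj1).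
  - destruct (mem_ex (th2 (oxx x hx))) as [t mt].
    exists (ov (fo Q2 (oxx x hx))), t, (fo j2 (fo Q2 (oxx x hx))).
    split. right; exists hx; auto. apply (proj1 hj2).
Qed.

Lemma Ret_on_B (c : Ob Tt (union B1 B2)) :
  exists t, Ret (ov c) (ov c) t /\ equivS D Tt t (fun _ => ov c).
Proof.
  destruct (proj2 (proj2_sig c)) as [h|h].
  - pose (y := oxx (ov c) (hBX1 h)). destruct (mem_ex (th1 y)) as [t mt].
    exists t. split. left. exists (hBX1 h). split; auto. symmetry; exact (retract_fixes hQ1 (y := y) h).
    exact (equiv_Tt (mem_equiv mt (retract_unit_on_A hQ1 (y := y) h))).
  - pose (y := oxx (ov c) (hBX2 h)). destruct (mem_ex (th2 y)) as [t mt].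
    exists t. split. right. exists (hBX2 h). split; auto. symmetry; exact (retract_fixes hQ2 (y := y) h).
    exact (equiv_Tt (mem_equiv mt (retract_unit_on_A hQ2 (y := y) h))).
Qed.

Definition Transported (g : I -> pt D) : Prop :=
  forall q q' t t' (a b : Ob Tt (union B1 B2)),
  Ret (g I0) q t -> Ret (g I1) q' t' -> ov a = q -> ov b = q' ->
  exists f : Hom Tt (ov a) (ov b), Gen j1 j2 a b f /\
    forall r, mem f r -> equivS D Tt (concat g t') (concat t r).

Lemma transported_units g q q' t t' t1 t1' (a b : Ob Tt (union B1 B2)) :
  dpathS Tt g -> Ret (g I0) q t -> Ret (g I1) q' t' -> ov a = q ->
  equivS D Tt t t1 -> equivS D Tt t' t1' ->
  (exists f : Hom Tt (ov a) (ov b), Gen j1 j2 a b f /\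
     forall r, mem f r -> equivS D Tt (concat g t1') (concat t1 r)) ->
  exists f : Hom Tt (ov a) (ov b), Gen j1 j2 a b f /\
    forall r, mem f r -> equivS D Tt (concat g t') (concat t r).
Proof.
  intros dg h0 h1 ea E E' [f [G H]]. exists f. split; auto. intros r mr.
  destruct (Ret_path h0) as [_ [_ tq]]. destruct (Ret_path h1) as [_ [t0' _]].
  destruct (mem_rep mr) as [_ [dr [r0 _]]]. destruct (equiv_ends E) as [_ e1].
  eapply rst_trans. apply (equiv_concat_r E' dg). congruence.
  eapply rst_trans. exact (H r mr).
  apply equiv_concat_l; [apply rst_sym, E | exact dr | congruence].
Qed.

Lemma transported_side g : dpathS X1 g \/ dpathS X2 g -> Transported g.
Proof.
  intros hg q q' t t' a b h0 h1 ea eb.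
  assert (dg : dpathS Tt g) by (destruct hg as [hg|hg]; exact (dpathS_Tt hg)).
  destruct hg as [hg|hg].
  - destruct (Ret_side1 (proj2 hg I0) h0) as [t1 [k0 E]].
    destruct (Ret_side1 (proj2 hg I1) h1) as [t1' [k1 E']].
    apply (transported_units dg h0 h1 ea E E').
    exact (transport_side hj1 hQ1 (@gen1 D X1 X2 B1 B2 j1 j2) hg k0 k1 ea eb).
  - destruct (Ret_side2 (proj2 hg I0) h0) as [t1 [k0 E]].
    destruct (Ret_side2 (proj2 hg I1) h1) as [t1' [k1 E']].
    apply (transported_units dg h0 h1 ea E E').
    exact (transport_side hj2 hQ2 (@gen2 D X1 X2 B1 B2 j1 j2) hg k0 k1 ea eb).
Qed.

Lemma transported_cut g s : 0 < s < 1 -> dpathS Tt g -> X1 (g (mkI s)) \/ X2 (g (mkI s)) ->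
  Transported (piece g 0 s) -> Transported (piece g s 1) -> Transported g.
Proof.
  intros hs dg hy T1 T2 q q' t t' a b h0 h1 ea eb.
  set (ga := piece g 0 s) in *. set (rho := piece g s 1) in *.
  assert (ga0 : ga I0 = g I0) by (unfold ga; rewrite piece_I0, mkI0; auto).
  assert (ga1 : ga I1 = g (mkI s)) by apply piece_I1.
  assert (rho0 : rho I0 = g (mkI s)) by apply piece_I0.
  assert (rho1 : rho I1 = g I1) by (unfold rho; rewrite piece_I1, mkI1; auto).
  assert (dga : dpathS Tt ga) by (apply piece_dpathS; auto; lra).
  assert (drho : dpathS Tt rho) by (apply piece_dpathS; auto; lra).
  destruct (Ret_exists hy) as [qy [ty [c [hty ec]]]].
  destruct (T1 q qy t ty a c) as [f1 [G1 H1]]; try rewrite ga0; try rewrite ga1; auto.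
  destruct (T2 qy q' ty t' c b) as [f2 [G2 H2]]; try rewrite rho0; try rewrite rho1; auto.
  exists (Defs.comp f1 f2). split. eapply genc; eauto.
  intros r mr. destruct (mem_ex f1) as [r1 m1]. destruct (mem_ex f2) as [r2 m2].
  destruct (Ret_path h0) as [dt [t0 tq]]. destruct (Ret_path h1) as [dt' [t0' tq']].
  destruct (Ret_path hty) as [dty [ty0 tyq]].
  destruct (mem_rep m1) as [_ [dr1 [r10 r11]]]. destruct (mem_rep m2) as [_ [dr2 [r20 r21]]].
  (* g t' ~ (ga rho) t' ~ ga (rho t') ~ ga (ty r2) ~ (ga ty) r2 ~ (t r1) r2 ~ t (r1 r2) ~ t r *)
  assert (Esplit : equivS D Tt g (concat ga rho)) by (apply equiv_split; auto; lra).
  eapply rst_trans. apply (equiv_concat_l Esplit dt'). congruence.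
  eapply rst_trans. apply equiv_assoc; auto; congruence.
  eapply rst_trans. apply equiv_concat_r. exact (H2 r2 m2). auto. rewrite concat_I0. congruence.
  eapply rst_trans. apply rst_sym, equiv_assoc; auto; congruence.
  eapply rst_trans. apply equiv_concat_l. exact (H1 r1 m1). auto. rewrite concat_I1. congruence.
  eapply rst_trans. apply equiv_assoc; auto; congruence.
  apply equiv_concat_r. exact (mem_equiv (mem_comp m1 m2) mr). auto.
  rewrite concat_I0. congruence.
Qed.

Lemma transported_dec n ts g : Dec D X1 X2 n ts g -> Transported g.
Proof.
  revert ts g. induction n as [|[|m] IH]; intros ts g hd.
  - destruct hd as [z [o _]]. lra.
  - destruct hd as [z [o hp]]. destruct (hp 0%nat ltac:(lia)) as [_ hs].
    rewrite z, o, piece01 in hs. apply transported_side, hs.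
  - pose proof (Dec_lt hd) as hl. pose proof hd as [z [o hp]].
    assert (ht1 : 0 < ts 1%nat < 1).
    { split. rewrite <- z. apply hl; lia. rewrite <- o. apply hl; lia. }
    destruct (hp 0%nat ltac:(lia)) as [_ hs]. rewrite z in hs.
    assert (dg : dpathS Tt g).
    { split. apply (proj2 (hgen g)). exists (S (S m)), ts. exact hd. intros; exact Logic.I. }
    apply transported_cut with (ts 1%nat); auto.
    + destruct hs as [hs|hs]; [left|right]; rewrite <- (piece_I1 g 0); apply hs.
    + apply transported_side, hs.
    + exact (IH _ _ (Dec_shift hd)).
Qed.

Theorem all_generated a b (f : Hom Tt (ov a) (ov b)) : Gen j1 j2 a b f.
Proof.
  destruct (mem_ex f) as [g mg]. destruct (mem_rep mg) as [_ [dg [g0 g1]]].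
  destruct (proj1 (hgen g) (proj1 dg)) as [n [ts hd]].
  destruct (Ret_on_B a) as [t [ht Et]]. destruct (Ret_on_B b) as [t' [ht' Et']].
  assert (hg0 : Ret (g I0) (ov a) t) by (rewrite g0; exact ht).
  assert (hg1 : Ret (g I1) (ov b) t') by (rewrite g1; exact ht').
  destruct (transported_dec hd hg0 hg1 eq_refl eq_refl) as [f' [G H]].
  destruct (mem_ex f') as [r mr]. destruct (mem_rep mr) as [_ [dr [r0 r1]]].
  destruct (Ret_path ht) as [dt [t0 tq]]. destruct (Ret_path ht') as [dt' [t0' tq']].
  replace f with f'; [exact G|].
  (* g ~ g . const ~ g t' ~ t r ~ const . r ~ r *)
  apply (hom_eq_class mr mg).
  eapply rst_trans. apply rst_sym, (equiv_lunit dr). rewrite r0.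
  eapply rst_trans. apply equiv_concat_l. apply rst_sym, Et. auto. congruence.
  eapply rst_trans. apply rst_sym, (H r mr).
  eapply rst_trans. apply equiv_concat_r. exact Et'. auto. congruence.
  rewrite <- g1. apply (equiv_runit dg).
Qed.

End Generation.

Section GluedAdjunction.
Variables (D : dspace) (X1 X2 A1 A2 B1 B2 : pt D -> Prop).
Hypotheses (hAB1 : forall x, A1 x -> B1 x) (hAB2 : forall x, A2 x -> B2 x).
Hypotheses (hBX1 : forall x, B1 x -> X1 x) (hBX2 : forall x, B2 x -> X2 x).
Variables (j1 : functor X1 B1 Tt (union B1 B2)) (j2 : functor X2 B2 Tt (union B1 B2))
  (j1' : functor X1 A1 Tt (union A1 A2)) (j2' : functor X2 A2 Tt (union A1 A2)).
Hypotheses (hj1 : IsIncl j1) (hj2 : IsIncl j2) (hj1' : IsIncl j1') (hj2' : IsIncl j2').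
Variables (P1 : functor X1 B1 X1 A1) (P2 : functor X2 B2 X2 A2)
  (k1 : functor X1 A1 X1 B1) (k2 : functor X2 A2 X2 B2)
  (eta1 : forall c, Hom X1 (ov c) (ov (fo k1 (fo P1 c))))
  (eta2 : forall c, Hom X2 (ov c) (ov (fo k2 (fo P2 c))))
  (eps1 : forall d, Hom X1 (ov (fo P1 (fo k1 d))) (ov d))
  (eps2 : forall d, Hom X2 (ov (fo P2 (fo k2 d))) (ov d)).
Hypotheses (hP1 : FutureRetract P1 k1 eta1 eps1) (hP2 : FutureRetract P2 k2 eta2 eps2).
Hypothesis heta : forall (y1 : Ob X1 B1) (y2 : Ob X2 B2), ov y1 = ov y2 ->
  exists w, mem (eta1 y1) w /\ mem (eta2 y2) w.
Variables (iota : functor Tt (union A1 A2) Tt (union B1 B2))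
  (P : functor Tt (union B1 B2) Tt (union A1 A2)).
Hypotheses (hiota : IsIncl iota) (hPj1 : FunEqC j1 P P1 j1') (hPj2 : FunEqC j2 P P2 j2').
Hypothesis hgen : forall a b f, Gen j1 j2 a b f.

Definition side1 (x : pt D) (h : B1 x) : Ob X1 B1 := exist _ x (conj (hBX1 h) h).
Definition side2 (x : pt D) (h : B2 x) : Ob X2 B2 := exist _ x (conj (hBX2 h) h).

Lemma j_side1 (c : Ob Tt (union B1 B2)) (h : B1 (ov c)) : fo j1 (side1 h) = c.
Proof. apply Ob_eq. rewrite (proj1 hj1). reflexivity. Qed.
Lemma j_side2 (c : Ob Tt (union B1 B2)) (h : B2 (ov c)) : fo j2 (side2 h) = c.
Proof. apply Ob_eq. rewrite (proj1 hj2). reflexivity. Qed.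

Lemma P_side1 (y : Ob X1 B1) : ov (fo P (fo j1 y)) = ov (fo P1 y).
Proof. rewrite (proj1 hPj1), (proj1 hj1'). reflexivity. Qed.
Lemma P_side2 (y : Ob X2 B2) : ov (fo P (fo j2 y)) = ov (fo P2 y).
Proof. rewrite (proj1 hPj2), (proj1 hj2'). reflexivity. Qed.

Lemma P_fixes_A (d : Ob Tt (union A1 A2)) : ov (fo P (fo iota d)) = ov d.
Proof.
  assert (hd : union A1 A2 (ov (fo iota d))) by (rewrite (proj1 hiota); exact (proj2 (proj2_sig d))).
  destruct hd as [h|h].
  - pose proof (P_side1 (side1 (hAB1 h))) as E. rewrite j_side1 in E.
    rewrite E, (retract_fixes hP1 (y := side1 (hAB1 h)) h). apply (proj1 hiota).
  - pose proof (P_side2 (side2 (hAB2 h))) as E. rewrite j_side2 in E.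
    rewrite E, (retract_fixes hP2 (y := side2 (hAB2 h)) h). apply (proj1 hiota).
Qed.

Definition UnitRep (c : Ob Tt (union B1 B2)) (r : I -> pt D) : Prop :=
  (exists y : Ob X1 B1, ov y = ov c /\ mem (eta1 y) r) \/
  (exists y : Ob X2 B2, ov y = ov c /\ mem (eta2 y) r).

Lemma UnitRep_equiv c r r' : UnitRep c r -> UnitRep c r' -> equivS D Tt r r'.
Proof.
  assert (cross : forall (y1 : Ob X1 B1) (y2 : Ob X2 B2) r1 r2, ov y1 = ov y2 ->
            mem (eta1 y1) r1 -> mem (eta2 y2) r2 -> equivS D Tt r1 r2).
  { intros y1 y2 r1 r2 e m1 m2. destruct (heta e) as [w [w1 w2]].
    eapply rst_trans; [exact (equiv_Tt (mem_equiv m1 w1)) | exact (equiv_Tt (mem_equiv w2 m2))]. }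
  intros [[y [ey my]]|[y [ey my]]] [[y' [ey' my']]|[y' [ey' my']]].
  - assert (y = y') by (apply Ob_eq; congruence). subst y'. exact (equiv_Tt (mem_equiv my my')).
  - apply (cross y y'); auto; congruence.
  - apply rst_sym. apply (cross y' y); auto; congruence.
  - assert (y = y') by (apply Ob_eq; congruence). subst y'. exact (equiv_Tt (mem_equiv my my')).
Qed.

Lemma UnitRep_exists c : exists r, UnitRep c r /\ dpathS Tt r /\ r I0 = ov c /\
  r I1 = ov (fo iota (fo P c)).
Proof.
  rewrite (proj1 hiota).
  assert (hc : union B1 B2 (ov c)) by exact (proj2 (proj2_sig c)). destruct hc as [h|h].
  - destruct (mem_ex (eta1 (side1 h))) as [r m]. destruct (mem_rep m) as [_ [dr [r0 r1]]].
    exists r. split; [left; exists (side1 h); auto|]. split; [exact (dpathS_Tt dr)|split; auto].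
    rewrite r1, (proj1 (proj1 hP1)), <- P_side1, j_side1. reflexivity.
  - destruct (mem_ex (eta2 (side2 h))) as [r m]. destruct (mem_rep m) as [_ [dr [r0 r1]]].
    exists r. split; [right; exists (side2 h); auto|]. split; [exact (dpathS_Tt dr)|split; auto].
    rewrite r1, (proj1 (proj1 hP2)), <- P_side2, j_side2. reflexivity.
Qed.

Lemma glued_unit_class c : exists g, dpathS Tt g /\ g I0 = ov c /\
  g I1 = ov (fo iota (fo P c)) /\
  (fun r => exists r0, UnitRep c r0 /\ equivS D Tt r0 r) = equivS D Tt g.
Proof.
  destruct (UnitRep_exists c) as [g [hg [dg [g0 g1]]]]. exists g.
  split; [auto|split; [auto|split; [auto|]]].
  extensionality r. apply propositional_extensionality. split.
  - intros [r0 [h0 E]]. eapply rst_trans; [|exact E]. exact (UnitRep_equiv hg h0).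
  - intros E. exists g; auto.
Qed.

(* the glued unit: the common class of the units of [P1] and [P2] *)
Definition glued_unit (c : Ob Tt (union B1 B2)) : Hom Tt (ov c) (ov (fo iota (fo P c))) :=
  exist _ (fun r => exists r0, UnitRep c r0 /\ equivS D Tt r0 r) (glued_unit_class c).

Definition glued_counit (d : Ob Tt (union A1 A2)) : Hom Tt (ov (fo P (fo iota d))) (ov d) :=
  hom_of_eq (S := Tt) Logic.I (P_fixes_A d).

Lemma mem_glued_unit c r : UnitRep c r -> mem (glued_unit c) r.
Proof. intros h. exists r. split; auto. apply rst_refl. Qed.

Lemma glued_unit_on_A c : union A1 A2 (ov c) -> mem (glued_unit c) (fun _ => ov c).
Proof.
  intros [h|h]; apply mem_glued_unit.
  - left. exists (side1 (hAB1 h)). split; auto. exact (retract_unit_on_A hP1 (y := side1 (hAB1 h)) h).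
  - right. exists (side2 (hAB2 h)). split; auto. exact (retract_unit_on_A hP2 (y := side2 (hAB2 h)) h).
Qed.

(* naturality of the glued unit: on generators it is the naturality of the
   units of [P1], [P2]; it is preserved by composition *)
Lemma glued_unit_natural a b (f : Hom Tt (ov a) (ov b)) :
  Defs.comp f (glued_unit b) = Defs.comp (glued_unit a) (fm iota (fm P f)).
Proof.
  induction (hgen f) as [y y' h|y y' h|a b c f g _ IHf _ IHg].
  - destruct (mem_ex h) as [rh mh]. destruct (mem_ex (eta1 y')) as [re' me'].
    destruct (mem_ex (eta1 y)) as [re me]. destruct (mem_ex (fm P1 h)) as [rp mp].
    apply hom_eq_class with (concat rh re') (concat re rp).
    + apply mem_comp. apply (incl_mem hj1 mh).
      apply mem_glued_unit. left. exists y'. rewrite (proj1 hj1); auto.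
    + apply mem_comp. apply mem_glued_unit. left. exists y. rewrite (proj1 hj1); auto.
      apply (incl_mem hiota). unfold mem. rewrite (proj2 hPj1). apply (incl_mem hj1' mp).
    + apply equiv_Tt with X1.
      exact (unit_naturality_paths (proj1 (proj2 hP1)) (proj1 hP1) mh me' me mp).
  - destruct (mem_ex h) as [rh mh]. destruct (mem_ex (eta2 y')) as [re' me'].
    destruct (mem_ex (eta2 y)) as [re me]. destruct (mem_ex (fm P2 h)) as [rp mp].
    apply hom_eq_class with (concat rh re') (concat re rp).
    + apply mem_comp. apply (incl_mem hj2 mh).
      apply mem_glued_unit. right. exists y'. rewrite (proj1 hj2); auto.
    + apply mem_comp. apply mem_glued_unit. right. exists y. rewrite (proj1 hj2); auto.
      apply (incl_mem hiota). unfold mem. rewrite (proj2 hPj2). apply (incl_mem hj2' mp).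
    + apply equiv_Tt with X2.
      exact (unit_naturality_paths (proj1 (proj2 hP2)) (proj1 hP2) mh me' me mp).
  - rewrite comp_assoc, IHg, <- comp_assoc, IHf, comp_assoc, (fm_comp P), (fm_comp iota).
    reflexivity.
Qed.

Lemma P_glued_unit_trivial c w : mem (fm P (glued_unit c)) w -> equivS D Tt w (fun _ => ov (fo P c)).
Proof.
  intros mw.
  assert (hc : union B1 B2 (ov c)) by exact (proj2 (proj2_sig c)). destruct hc as [h|h].
  - destruct (mem_ex (fm P1 (eta1 (side1 h)))) as [u mu].
    assert (cl : proj1_sig (fm P (glued_unit c)) = proj1_sig (fm j1' (fm P1 (eta1 (side1 h))))).
    { rewrite <- (proj2 hPj1). apply fm_class.
      - symmetry; apply j_side1.
      - apply Ob_eq. rewrite (proj1 hiota), (proj1 hj1), (proj1 (proj1 hP1)), <- P_side1, j_side1.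
        reflexivity.
      - destruct (mem_ex (eta1 (side1 h))) as [r mr].
        apply (class_ext (g := r) (g' := r)); [| apply (incl_mem hj1 mr) | apply rst_refl].
        apply mem_glued_unit. left. exists (side1 h). auto. }
    pose proof (incl_mem hj1' mu) as mu'. unfold mem in mu'. rewrite <- cl in mu'.
    eapply rst_trans. exact (mem_equiv mw mu').
    rewrite <- (j_side1 h), P_side1. exact (equiv_Tt (retract_image_unit_trivial hP1 mu)).
  - destruct (mem_ex (fm P2 (eta2 (side2 h)))) as [u mu].
    assert (cl : proj1_sig (fm P (glued_unit c)) = proj1_sig (fm j2' (fm P2 (eta2 (side2 h))))).
    { rewrite <- (proj2 hPj2). apply fm_class.
      - symmetry; apply j_side2.
      - apply Ob_eq. rewrite (proj1 hiota), (proj1 hj2), (proj1 (proj1 hP2)), <- P_side2, j_side2.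
        reflexivity.
      - destruct (mem_ex (eta2 (side2 h))) as [r mr].
        apply (class_ext (g := r) (g' := r)); [| apply (incl_mem hj2 mr) | apply rst_refl].
        apply mem_glued_unit. right. exists (side2 h). auto. }
    pose proof (incl_mem hj2' mu) as mu'. unfold mem in mu'. rewrite <- cl in mu'.
    eapply rst_trans. exact (mem_equiv mw mu').
    rewrite <- (j_side2 h), P_side2. exact (equiv_Tt (retract_image_unit_trivial hP2 mu)).
Qed.

Lemma mem_glued_counit d : mem (glued_counit d) (fun _ => ov d).
Proof. apply rst_refl. Qed.

Lemma P_iota_paths d d' (g : Hom Tt (ov d) (ov d')) x w :
  mem g x -> mem (fm P (fm iota g)) w -> equivS D Tt x w.
Proof.
  intros mx mw. pose proof (glued_unit_natural (fm iota g)) as N.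
  destruct (mem_rep mx) as [_ [dx [x0 x1]]]. destruct (mem_rep mw) as [_ [dw [w0 w1]]].
  rewrite P_fixes_A in w0.
  assert (hA : forall e : Ob Tt (union A1 A2), union A1 A2 (ov (fo iota e)))
    by (intros e; rewrite (proj1 hiota); exact (proj2 (proj2_sig e))).
  pose proof (mem_comp (incl_mem hiota mx) (glued_unit_on_A (hA d'))) as c1.
  pose proof (mem_comp (glued_unit_on_A (hA d)) (incl_mem hiota mw)) as c2.
  rewrite N in c1. pose proof (mem_equiv c1 c2) as E. rewrite !(proj1 hiota) in E.
  eapply rst_trans. apply rst_sym, (equiv_runit dx). rewrite x1.
  eapply rst_trans. exact E. rewrite <- w0. apply (equiv_lunit dw).
Qed.

Theorem glued_adjunction : Adjunction P iota glued_unit glued_counit.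
Proof.
  split; [|split; [|split]].
  - exact glued_unit_natural.
  - intros d d' g. destruct (mem_ex g) as [x mx]. destruct (mem_ex (fm P (fm iota g))) as [w mw].
    destruct (mem_rep mx) as [_ [dx [x0 x1]]]. destruct (mem_rep mw) as [_ [dw [w0 w1]]].
    rewrite P_fixes_A in w0, w1.
    apply hom_eq_class with (concat w (fun _ => ov d')) (concat (fun _ => ov d) x).
    + apply mem_comp; auto using mem_glued_counit.
    + apply mem_comp; auto using mem_glued_counit.
    + eapply rst_trans. rewrite <- w1. apply (equiv_runit dw).
      apply rst_sym. eapply rst_trans. rewrite <- x0. apply (equiv_lunit dx).
      exact (P_iota_paths mx mw).
  - intros c. destruct (mem_ex (fm P (glued_unit c))) as [w mw].
    destruct (mem_rep mw) as [_ [dw [_ w1]]]. rewrite P_fixes_A in w1.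
    apply hom_eq_class with (concat w (fun _ => ov (fo P c))) (fun _ => ov (fo P c)).
    + apply mem_comp; auto using mem_glued_counit.
    + apply mem_idm.
    + eapply rst_trans. rewrite <- w1. apply (equiv_runit dw).
      exact (P_glued_unit_trivial mw).
  - intros d.
    assert (hd : union A1 A2 (ov (fo iota d))) by (rewrite (proj1 hiota); exact (proj2 (proj2_sig d))).
    apply hom_eq_class with (concat (fun _ => ov (fo iota d)) (fun _ => ov d)) (fun _ => ov (fo iota d)).
    + apply mem_comp. apply glued_unit_on_A; auto. apply (incl_mem hiota), mem_glued_counit.
    + apply mem_idm.
    + rewrite (proj1 hiota). apply (equiv_runit (g := fun _ => ov d)).
      split. apply dpath_const. intros; exact Logic.I.
Qed.

Lemma glued_unit_side1 (x : Ob Tt (union B1 B2)) (y : Ob X1 B1) :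
  ov y = ov x -> proj1_sig (glued_unit x) = proj1_sig (fm j1 (eta1 y)).
Proof.
  intros e. destruct (mem_ex (eta1 y)) as [r mr]. apply (class_ext (g := r) (g' := r)).
  apply mem_glued_unit; left; exists y; auto. apply (incl_mem hj1 mr). apply rst_refl.
Qed.

Lemma glued_unit_side2 (x : Ob Tt (union B1 B2)) (y : Ob X2 B2) :
  ov y = ov x -> proj1_sig (glued_unit x) = proj1_sig (fm j2 (eta2 y)).
Proof.
  intros e. destruct (mem_ex (eta2 y)) as [r mr]. apply (class_ext (g := r) (g' := r)).
  apply mem_glued_unit; right; exists y; auto. apply (incl_mem hj2 mr). apply rst_refl.
Qed.

Theorem glued_future_retract :
  exists (eta : forall c, Hom Tt (ov c) (ov (fo iota (fo P c))))
         (eps : forall d, Hom Tt (ov (fo P (fo iota d))) (ov d)),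
    Adjunction P iota eta eps /\
    (forall (x : Ob Tt (union B1 B2)) (y : Ob X1 B1), ov y = ov x ->
        proj1_sig (eta x) = proj1_sig (fm j1 (eta1 y))) /\
    (forall (x : Ob Tt (union B1 B2)) (y : Ob X2 B2), ov y = ov x ->
        proj1_sig (eta x) = proj1_sig (fm j2 (eta2 y))) /\
    (forall d, proj1_sig (eps d) = proj1_sig (idm (ovS d))) /\
    FutureRetract P iota eta eps.
Proof.
  exists glued_unit, glued_counit.
  split; [exact glued_adjunction|].
  split; [exact glued_unit_side1|]. split; [exact glued_unit_side2|].
  split; [reflexivity|].
  split; [exact hiota|split; [exact glued_adjunction|]].
  intros a ha. apply (class_ext (glued_unit_on_A ha) (mem_idm _)), rst_refl.
Qed.

End GluedAdjunction.

Lemma Q_units_agree (D : dspace) (X1 X2 B0 B1 B2 : pt D -> Prop)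
  (i1 : functor (inter X1 X2) B0 X1 B1) (i2 : functor (inter X1 X2) B0 X2 B2)
  (e1 : functor (inter X1 X2) (inter X1 X2) X1 X1) (e2 : functor (inter X1 X2) (inter X1 X2) X2 X2)
  (Q0 : functor (inter X1 X2) (inter X1 X2) (inter X1 X2) B0)
  (Q1 : functor X1 X1 X1 B1) (Q2 : functor X2 X2 X2 B2)
  (kQ0 : functor (inter X1 X2) B0 (inter X1 X2) (inter X1 X2))
  (kQ1 : functor X1 B1 X1 X1) (kQ2 : functor X2 B2 X2 X2)
  (th0 : forall c, Hom (inter X1 X2) (ov c) (ov (fo kQ0 (fo Q0 c))))
  (th1 : forall c, Hom X1 (ov c) (ov (fo kQ1 (fo Q1 c))))
  (th2 : forall c, Hom X2 (ov c) (ov (fo kQ2 (fo Q2 c)))) :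
  IsIncl i1 -> IsIncl i2 -> IsIncl e1 -> IsIncl e2 ->
  FunEqC e1 Q1 Q0 i1 -> FunEqC e2 Q2 Q0 i2 ->
  (forall x, proj1_sig (fm e1 (th0 x)) = proj1_sig (th1 (fo e1 x))) ->
  (forall x, proj1_sig (fm e2 (th0 x)) = proj1_sig (th2 (fo e2 x))) ->
  forall x (h1 : X1 x) (h2 : X2 x),
    ov (fo Q1 (oxx x h1)) = ov (fo Q2 (oxx x h2)) /\
    exists w, mem (th1 (oxx x h1)) w /\ mem (th2 (oxx x h2)) w.
Proof.
  intros hi1 hi2 he1 he2 hQc1 hQc2 hthc1 hthc2 x h1 h2.
  set (z := oxx x (conj h1 h2 : inter X1 X2 x)). destruct (mem_ex (th0 z)) as [w mw].
  assert (E1 : fo e1 z = oxx x h1) by (apply Ob_eq; rewrite (proj1 he1); auto).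
  assert (E2 : fo e2 z = oxx x h2) by (apply Ob_eq; rewrite (proj1 he2); auto).
  split; [|exists w; split].
  - rewrite <- E1, <- E2, (proj1 hQc1), (proj1 hQc2), (proj1 hi1), (proj1 hi2). auto.
  - pose proof (incl_mem he1 mw) as q. unfold mem in q. rewrite hthc1, E1 in q. exact q.
  - pose proof (incl_mem he2 mw) as q. unfold mem in q. rewrite hthc2, E2 in q. exact q.
Qed.

Lemma P_units_agree (D : dspace) (X1 X2 B0 B1 B2 A0 A1 A2 : pt D -> Prop)
  (i1 : functor (inter X1 X2) B0 X1 B1) (i2 : functor (inter X1 X2) B0 X2 B2)
  (P0 : functor (inter X1 X2) B0 (inter X1 X2) A0)
  (P1 : functor X1 B1 X1 A1) (P2 : functor X2 B2 X2 A2)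
  (k0 : functor (inter X1 X2) A0 (inter X1 X2) B0)
  (k1 : functor X1 A1 X1 B1) (k2 : functor X2 A2 X2 B2)
  (eta0 : forall c, Hom (inter X1 X2) (ov c) (ov (fo k0 (fo P0 c))))
  (eta1 : forall c, Hom X1 (ov c) (ov (fo k1 (fo P1 c))))
  (eta2 : forall c, Hom X2 (ov c) (ov (fo k2 (fo P2 c)))) :
  (forall x, B0 x -> inter X1 X2 x) -> (forall x, B0 x <-> B1 x /\ B2 x) ->
  IsIncl i1 -> IsIncl i2 ->
  (forall x, proj1_sig (fm i1 (eta0 x)) = proj1_sig (eta1 (fo i1 x))) ->
  (forall x, proj1_sig (fm i2 (eta0 x)) = proj1_sig (eta2 (fo i2 x))) ->
  forall (y1 : Ob X1 B1) (y2 : Ob X2 B2), ov y1 = ov y2 ->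
    exists w, mem (eta1 y1) w /\ mem (eta2 y2) w.
Proof.
  intros hBX0 hB0 hi1 hi2 hetac1 hetac2 y1 y2 e.
  assert (hb : B0 (ov y1)).
  { apply hB0. split. exact (proj2 (proj2_sig y1)). rewrite e; exact (proj2 (proj2_sig y2)). }
  set (z := exist (fun x => inter X1 X2 x /\ B0 x) (ov y1) (conj (hBX0 _ hb) hb) : Ob (inter X1 X2) B0).
  destruct (mem_ex (eta0 z)) as [w mw].
  assert (E1 : fo i1 z = y1) by (apply Ob_eq; rewrite (proj1 hi1); auto).
  assert (E2 : fo i2 z = y2) by (apply Ob_eq; rewrite (proj1 hi2); auto).
  exists w. split.
  - pose proof (incl_mem hi1 mw) as q. unfold mem in q. rewrite hetac1, E1 in q. exact q.
  - pose proof (incl_mem hi2 mw) as q. unfold mem in q. rewrite hetac2, E2 in q. exact q.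
Qed.

Theorem mainTheorem10
  (D : dspace) (X1 X2 : pt D -> Prop)
  (* van Kampen setup *)
  (hcov : forall x, Int X1 x \/ Int X2 x)
  (hgen : GeneratedBy D X1 X2)
  (A0 A1 A2 B0 B1 B2 : pt D -> Prop)
  (hAB0 : forall x, A0 x -> B0 x) (hAB1 : forall x, A1 x -> B1 x) (hAB2 : forall x, A2 x -> B2 x)
  (hBX0 : forall x, B0 x -> inter X1 X2 x) (hBX1 : forall x, B1 x -> X1 x)
  (hBX2 : forall x, B2 x -> X2 x)
  (hA0 : forall x, A0 x <-> A1 x /\ A2 x) (hB0 : forall x, B0 x <-> B1 x /\ B2 x)
  (hAint : forall x, union A1 A2 x -> IntRel (union A1 A2) A1 x \/ IntRel (union A1 A2) A2 x)
  (hBint : forall x, union B1 B2 x -> IntRel (union B1 B2) B1 x \/ IntRel (union B1 B2) B2 x)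
  (* inclusion-induced functors *)
  (i1 : functor (inter X1 X2) B0 X1 B1) (i2 : functor (inter X1 X2) B0 X2 B2)
  (j1 : functor X1 B1 Tt (union B1 B2)) (j2 : functor X2 B2 Tt (union B1 B2))
  (i1' : functor (inter X1 X2) A0 X1 A1) (i2' : functor (inter X1 X2) A0 X2 A2)
  (j1' : functor X1 A1 Tt (union A1 A2)) (j2' : functor X2 A2 Tt (union A1 A2))
  (hi1 : IsIncl i1) (hi2 : IsIncl i2) (hj1 : IsIncl j1) (hj2 : IsIncl j2)
  (hi1' : IsIncl i1') (hi2' : IsIncl i2') (hj1' : IsIncl j1') (hj2' : IsIncl j2')
  (* compatible future retracts Q_k : pi1(X_k) -> pi1(X_k, B_k) *)
  (e1 : functor (inter X1 X2) (inter X1 X2) X1 X1)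
  (e2 : functor (inter X1 X2) (inter X1 X2) X2 X2)
  (he1 : IsIncl e1) (he2 : IsIncl e2)
  (Q0 : functor (inter X1 X2) (inter X1 X2) (inter X1 X2) B0)
  (Q1 : functor X1 X1 X1 B1) (Q2 : functor X2 X2 X2 B2)
  (kQ0 : functor (inter X1 X2) B0 (inter X1 X2) (inter X1 X2))
  (kQ1 : functor X1 B1 X1 X1) (kQ2 : functor X2 B2 X2 X2)
  (th0 : forall c, Hom (inter X1 X2) (ov c) (ov (fo kQ0 (fo Q0 c))))
  (th1 : forall c, Hom X1 (ov c) (ov (fo kQ1 (fo Q1 c))))
  (th2 : forall c, Hom X2 (ov c) (ov (fo kQ2 (fo Q2 c))))
  (ta0 : forall d, Hom (inter X1 X2) (ov (fo Q0 (fo kQ0 d))) (ov d))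
  (ta1 : forall d, Hom X1 (ov (fo Q1 (fo kQ1 d))) (ov d))
  (ta2 : forall d, Hom X2 (ov (fo Q2 (fo kQ2 d))) (ov d))
  (hQ0 : FutureRetract Q0 kQ0 th0 ta0) (hQ1 : FutureRetract Q1 kQ1 th1 ta1)
  (hQ2 : FutureRetract Q2 kQ2 th2 ta2)
  (hQc1 : FunEqC e1 Q1 Q0 i1) (hQc2 : FunEqC e2 Q2 Q0 i2)
  (hthc1 : forall x, proj1_sig (fm e1 (th0 x)) = proj1_sig (th1 (fo e1 x)))
  (hthc2 : forall x, proj1_sig (fm e2 (th0 x)) = proj1_sig (th2 (fo e2 x)))
  (* compatible future retracts P_k : pi1(X_k, B_k) -> pi1(X_k, A_k) *)
  (P0 : functor (inter X1 X2) B0 (inter X1 X2) A0)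
  (P1 : functor X1 B1 X1 A1) (P2 : functor X2 B2 X2 A2)
  (k0 : functor (inter X1 X2) A0 (inter X1 X2) B0)
  (k1 : functor X1 A1 X1 B1) (k2 : functor X2 A2 X2 B2)
  (eta0 : forall c, Hom (inter X1 X2) (ov c) (ov (fo k0 (fo P0 c))))
  (eta1 : forall c, Hom X1 (ov c) (ov (fo k1 (fo P1 c))))
  (eta2 : forall c, Hom X2 (ov c) (ov (fo k2 (fo P2 c))))
  (eps0 : forall d, Hom (inter X1 X2) (ov (fo P0 (fo k0 d))) (ov d))
  (eps1 : forall d, Hom X1 (ov (fo P1 (fo k1 d))) (ov d))
  (eps2 : forall d, Hom X2 (ov (fo P2 (fo k2 d))) (ov d))
  (hP0 : FutureRetract P0 k0 eta0 eps0) (hP1 : FutureRetract P1 k1 eta1 eps1)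
  (hP2 : FutureRetract P2 k2 eta2 eps2)
  (hPc1 : FunEqC i1 P1 P0 i1') (hPc2 : FunEqC i2 P2 P0 i2')
  (hetac1 : forall x, proj1_sig (fm i1 (eta0 x)) = proj1_sig (eta1 (fo i1 x)))
  (hetac2 : forall x, proj1_sig (fm i2 (eta0 x)) = proj1_sig (eta2 (fo i2 x)))
  (* the inclusion iota and the functor P with P j_k = j'_k P_k *)
  (iota : functor Tt (union A1 A2) Tt (union B1 B2)) (hiota : IsIncl iota)
  (P : functor Tt (union B1 B2) Tt (union A1 A2))
  (hPj1 : FunEqC j1 P P1 j1') (hPj2 : FunEqC j2 P P2 j2') :
  exists (eta : forall c, Hom Tt (ov c) (ov (fo iota (fo P c))))
         (eps : forall d, Hom Tt (ov (fo P (fo iota d))) (ov d)),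
    Adjunction P iota eta eps /\
    (forall (x : Ob Tt (union B1 B2)) (y : Ob X1 B1), ov y = ov x ->
        proj1_sig (eta x) = proj1_sig (fm j1 (eta1 y))) /\
    (forall (x : Ob Tt (union B1 B2)) (y : Ob X2 B2), ov y = ov x ->
        proj1_sig (eta x) = proj1_sig (fm j2 (eta2 y))) /\
    (forall d, proj1_sig (eps d) = proj1_sig (idm (ovS d))) /\
    FutureRetract P iota eta eps.
Proof.
  pose proof (Q_units_agree hi1 hi2 he1 he2 hQc1 hQc2 hthc1 hthc2) as hQc.
  pose proof (P_units_agree hBX0 hB0 hi1 hi2 hetac1 hetac2) as heta.
  pose proof (all_generated hgen hBX1 hBX2 hj1 hj2 hQ1 hQ2 hQc) as hgenB.
  exact (glued_future_retract hAB1 hAB2 hBX1 hBX2 hj1 hj2 hj1' hj2' hP1 hP2 heta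
           hiota hPj1 hPj2 hgenB).
Qed.
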